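(* Let $\boldsymbol{m}\in\mathbb{N}^2$ and $f\in\mathcal{L}(\mathrm{I}^{(\boldsymbol{m})})$, and let $P_f=\sum_{\boldsymbol{\gamma}\in\Gamma_\square}c_{\boldsymbol{\gamma}}(f)X_{\boldsymbol{\gamma}}$ be the unique function in $\Pi_\square$ with $P_f(r_{i_1},\theta_{i_2})=f(\boldsymbol{i})$ for all $\boldsymbol{i}\in\mathrm{I}^{(\boldsymbol{m})}$. Then $c_{\boldsymbol{\gamma}}(f)=\langle f,\chi_{\boldsymbol{\gamma}}\rangle_w/\|\chi_{\boldsymbol{\gamma}}\|_w^2$ for all $\boldsymbol{\gamma}\in\Gamma_\square$, and \[\frac1\pi\int_0^{2\pi}\!\!\int_0^1P_f(r,\theta)\,r\,dr\,d\theta=\sum_{k=0}^{\lfloor m_1/2\rfloor}\frac{c_{(4k,0)}(f)}{1-4k^2}.\] In particular, for every $P\in\Pi_\square$, taking $f(\boldsymbol{i})=P(r_{i_1},\theta_{i_2})$, the right-hand side equals $\frac1\pi\int_0^{2\pi}\int_0^1P(r,\theta)\,r\,dr\,d\theta$.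
   Context: $\mathrm{I}^{(\boldsymbol{m})}=\{(i_1,i_2)\in\mathbb{Z}^2:\ 0\le i_1\le m_1,\ -2m_2<i_2\le 2m_2,\ i_2\le0\text{ if }i_1=m_1,\ i_1+i_2\text{ even}\}$; $\mathcal{L}(\mathrm{I}^{(\boldsymbol{m})})$ is the space of all functions $\mathrm{I}^{(\boldsymbol{m})}\to\mathbb{C}$; $r_{i_1}=\cos\!\big(\frac{i_1\pi}{2m_1}\big)$, $\theta_{i_2}=\frac{i_2\pi}{2m_2}$. Weights $w_{\boldsymbol{i}}=\frac{1}{4m_1m_2}$ if $i_1=0$, $w_{\boldsymbol{i}}=\frac{2}{4m_1m_2}$ if $0<i_1\le m_1$; $\langle f,h\rangle_w=\sum_{\boldsymbol{i}}w_{\boldsymbol{i}}f(\boldsymbol{i})\overline{h(\boldsymbol{i})}$. $\chi_{\boldsymbol{\gamma}}(\boldsymbol{i})=\cos\!\big(\frac{\gamma_1i_1\pi}{2m_1}\big)e^{\mathrm{i}\gamma_2i_2\pi/(2m_2)}$. $X_{\boldsymbol{\gamma}}(r,\theta)=T_{\gamma_1}(r)e^{\mathrm{i}\gamma_2\theta}$ with $T_n(r)=\cos(n\arccos r)$. $\Gamma_\square=\{\boldsymbol{\gamma}\in\mathbb{Z}^2: 0\le\gamma_1\le2m_1,\ -m_2<\gamma_2\le m_2,\ \gamma_1+\gamma_2\text{ even}\}$ and $\Pi_\square=\mathrm{span}\{X_{\boldsymbol{\gamma}}:\boldsymbol{\gamma}\in\Gamma_\square\}$. *)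

From Stdlib Require Import Reals Lra Lia ZArith List.
Open Scope R_scope.

Definition Cx : Type := (R * R)%type.
Definition Cre (z : Cx) : R := fst z.
Definition Cim (z : Cx) : R := snd z.
Definition RtoC (x : R) : Cx := (x, 0).
Definition C0 : Cx := (0, 0).
Definition Cadd (z w : Cx) : Cx := (fst z + fst w, snd z + snd w).
Definition Cmul (z w : Cx) : Cx :=
  (fst z * fst w - snd z * snd w, fst z * snd w + snd z * fst w).
Definition Cconj (z : Cx) : Cx := (fst z, - snd z).
Definition CdivR (z : Cx) (x : R) : Cx := (fst z / x, snd z / x).
Definition Cexpi (t : R) : Cx := (cos t, sin t).

Definition Csum {A : Type} (l : list A) (F : A -> Cx) : Cx :=
  fold_right (fun a acc => Cadd (F a) acc) C0 l.

Definition Zrange (a : Z) (n : nat) : list Z :=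
  map (fun k => (a + Z.of_nat k)%Z) (seq 0 n).

Definition inI (m1 m2 : nat) (i : Z * Z) : bool :=
  let (i1, i2) := i in
  ((0 <=? i1)%Z && (i1 <=? Z.of_nat m1)%Z &&
   (- 2 * Z.of_nat m2 <? i2)%Z && (i2 <=? 2 * Z.of_nat m2)%Z &&
   (if (i1 =? Z.of_nat m1)%Z then (i2 <=? 0)%Z else true) &&
   Z.even (i1 + i2))%bool.

Definition pairs (la lb : list Z) : list (Z * Z) :=
  flat_map (fun a => map (fun b => (a, b)) lb) la.

Definition Iset (m1 m2 : nat) : list (Z * Z) :=
  filter (inI m1 m2)
    (pairs (Zrange 0 (S m1)) (Zrange (- 2 * Z.of_nat m2 + 1) (4 * m2))).

Definition inGamma (m1 m2 : nat) (g : Z * Z) : bool :=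
  let (g1, g2) := g in
  ((0 <=? g1)%Z && (g1 <=? 2 * Z.of_nat m1)%Z &&
   (- Z.of_nat m2 <? g2)%Z && (g2 <=? Z.of_nat m2)%Z &&
   Z.even (g1 + g2))%bool.

Definition Gammaset (m1 m2 : nat) : list (Z * Z) :=
  filter (inGamma m1 m2)
    (pairs (Zrange 0 (S (2 * m1))) (Zrange (- Z.of_nat m2 + 1) (2 * m2))).

Definition r_node (m1 : nat) (i1 : Z) : R := cos (IZR i1 * PI / (2 * INR m1)).
Definition theta_node (m2 : nat) (i2 : Z) : R := IZR i2 * PI / (2 * INR m2).

Definition weight (m1 m2 : nat) (i : Z * Z) : R :=
  if (fst i =? 0)%Z then 1 / (4 * INR m1 * INR m2)
  else 2 / (4 * INR m1 * INR m2).

(* <f,h>_w = sum_i w_i f(i) conj(h(i)) ; functions on I^(m) are represented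
   as functions on Z*Z, only their values on I^(m) matter *)
Definition inner_w (m1 m2 : nat) (f h : Z * Z -> Cx) : Cx :=
  Csum (Iset m1 m2)
    (fun i => Cmul (RtoC (weight m1 m2 i)) (Cmul (f i) (Cconj (h i)))).

Definition chi (m1 m2 : nat) (g : Z * Z) (i : Z * Z) : Cx :=
  Cmul (RtoC (cos (IZR (fst g) * IZR (fst i) * PI / (2 * INR m1))))
       (Cexpi (IZR (snd g) * IZR (snd i) * PI / (2 * INR m2))).

Definition normsq_w (m1 m2 : nat) (h : Z * Z -> Cx) : R :=
  Cre (inner_w m1 m2 h h).

Definition Tcheb (n : Z) (r : R) : R := cos (IZR n * acos r).

Definition Xfun (g : Z * Z) (r theta : R) : Cx :=
  Cmul (RtoC (Tcheb (fst g) r)) (Cexpi (IZR (snd g) * theta)).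

Definition Pfun (m1 m2 : nat) (c : Z * Z -> Cx) (r theta : R) : Cx :=
  Csum (Gammaset m1 m2) (fun g => Cmul (c g) (Xfun g r theta)).

Definition interpolates (m1 m2 : nat) (c : Z * Z -> Cx) (f : Z * Z -> Cx) : Prop :=
  forall i, In i (Iset m1 m2) ->
    Pfun m1 m2 c (r_node m1 (fst i)) (theta_node m2 (snd i)) = f i.

Definition coef (m1 m2 : nat) (f : Z * Z -> Cx) (g : Z * Z) : Cx :=
  CdivR (inner_w m1 m2 f (chi m1 m2 g)) (normsq_w m1 m2 (chi m1 m2 g)).

Definition has_RInt (h : R -> R) (a b v : R) : Prop :=
  exists pr : Riemann_integrable h a b, RiemannInt pr = v.

Definition has_iter_int (F : R -> R -> R) (v : R) : Prop :=
  exists G : R -> R,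
    (forall theta, 0 <= theta <= 2 * PI -> has_RInt (fun r => F r theta) 0 1 (G theta))
    /\ has_RInt G 0 (2 * PI) v.

Definition disk_mean (P : R -> R -> Cx) (z : Cx) : Prop :=
  exists vre vim : R,
    has_iter_int (fun r theta => Cre (P r theta) * r) vre /\
    has_iter_int (fun r theta => Cim (P r theta) * r) vim /\
    vre / PI = Cre z /\ vim / PI = Cim z.

Definition cubature (m1 : nat) (c : Z * Z -> Cx) : Cx :=
  Csum (seq 0 (S (Nat.div m1 2)))
    (fun k => CdivR (c (4 * Z.of_nat k, 0)%Z) (1 - 4 * INR k ^ 2)).

From Stdlib Require Import Reals ZArith List Lra Lia Bool.
From Coquelicot Require Import Hierarchy Continuity Derive AutoDerive RInt RInt_analysis.
Open Scope R_scope.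

(* The proof rests on two discrete orthogonality relations, both reduced to
   one-dimensional sums of cosines along arithmetic progressions (telescoping
   sums, the trapezoidal rule on [[0, PI]], and their restriction to one parity
   class of indices, which is how the constraints [i1 + i2 even] and
   [gamma1 + gamma2 even] enter):
   - orthogonality: [<chi_a, chi_b>_w = delta_ab ||chi_a||_w^2] on [I^(m)];
     it gives the coefficient formula for any interpolant (uniqueness);
   - dual orthogonality: [sum_g chi_g(i) conj(chi_g(j)) / ||chi_g||_w^2 =
     delta_ij / w_i]; it shows that the coefficients [coef f] interpolate [f]
     (existence).
   At the nodes, [X_gamma] coincides with [chi_gamma] since [acos (cos x) = x].
   For the disk mean, the angular integral of [e^{i g2 t}] keeps only [g2 = 0]
   and the radial integral of [T_g1(r) r] is [1 / (2 (1 - 4k^2))] for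
   [g1 = 4k] and [0] for [g1 = 4k + 2] (via [r = cos y]); odd [g1] cannot occur
   with [g2 = 0], which yields the cubature sum.  Exactness on [Pi_square]
   follows because [P] interpolates its own node values. *)

Lemma cos_add_2kPI x k : cos (x + 2 * IZR k * PI) = cos x.
Proof.
  destruct (Z_le_gt_dec 0 k).
  - replace k with (Z.of_nat (Z.to_nat k)) by lia.
    rewrite <- INR_IZR_INZ. apply cos_period.
  - replace x with ((x + 2 * IZR k * PI) + 2 * INR (Z.to_nat (- k)) * PI) at 2.
    + now rewrite cos_period.
    + rewrite INR_IZR_INZ, Z2Nat.id, opp_IZR by lia. ring.
Qed.

Lemma sin_add_2kPI x k : sin (x + 2 * IZR k * PI) = sin x.
Proof.
  destruct (Z_le_gt_dec 0 k).
  - replace k with (Z.of_nat (Z.to_nat k)) by lia.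
    rewrite <- INR_IZR_INZ. apply sin_period.
  - replace x with ((x + 2 * IZR k * PI) + 2 * INR (Z.to_nat (- k)) * PI) at 2.
    + now rewrite sin_period.
    + rewrite INR_IZR_INZ, Z2Nat.id, opp_IZR by lia. ring.
Qed.

Lemma cos_int_PI z : cos (IZR z * PI) = if Z.even z then 1 else -1.
Proof.
  destruct (Z.Even_or_Odd z) as [[q ->]|[q ->]].
  - rewrite Z.even_even. replace (IZR (2 * q) * PI) with (0 + 2 * IZR q * PI)
      by (rewrite mult_IZR; ring). rewrite cos_add_2kPI. apply cos_0.
  - rewrite Z.even_odd. replace (IZR (2 * q + 1) * PI) with (PI + 2 * IZR q * PI)
      by (rewrite plus_IZR, mult_IZR; ring). rewrite cos_add_2kPI. apply cos_PI.
Qed.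

Lemma sin_int_PI z : sin (IZR z * PI) = 0.
Proof.
  destruct (Z.Even_or_Odd z) as [[q ->]|[q ->]].
  - replace (IZR (2 * q) * PI) with (0 + 2 * IZR q * PI)
      by (rewrite mult_IZR; ring). rewrite sin_add_2kPI. apply sin_0.
  - replace (IZR (2 * q + 1) * PI) with (PI + 2 * IZR q * PI)
      by (rewrite plus_IZR, mult_IZR; ring). rewrite sin_add_2kPI. apply sin_PI.
Qed.

Lemma even_indicator z : (if Z.even z then 1 else 0) = (1 + cos (IZR z * PI)) / 2.
Proof. rewrite cos_int_PI. destruct (Z.even z); field. Qed.

Lemma cos_odd_half_PI z : Z.even z = false -> cos (IZR z * PI / 2) = 0.
Proof.
  intro H. destruct (Z.Even_or_Odd z) as [[q ->]|[q ->]].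
  - now rewrite Z.even_even in H.
  - replace (IZR (2 * q + 1) * PI / 2) with (PI / 2 + IZR q * PI)
      by (rewrite plus_IZR, mult_IZR; field).
    rewrite cos_plus, cos_PI2, sin_PI2, sin_int_PI. ring.
Qed.

Lemma sin_PI_frac_eq_0 (x : Z) (n : R) : 0 < n ->
  sin (PI * IZR x / n) = 0 -> exists k, IZR x = IZR k * n.
Proof.
  intros Hn H. apply sin_eq_0_0 in H as [k Hk]. exists k.
  pose proof PI_RGT_0.
  apply Rmult_eq_reg_l with (PI / n); [|apply Rgt_not_eq, Rdiv_lt_0_compat; lra].
  replace (PI / n * IZR x) with (PI * IZR x / n) by (field; lra).
  rewrite Hk. field. lra.
Qed.

Lemma cos_mul_cos x y : cos x * cos y = (cos (x - y) + cos (x + y)) / 2.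
Proof. rewrite cos_minus, cos_plus. field. Qed.

Definition Rsum {A : Type} (l : list A) (F : A -> R) : R :=
  fold_right (fun a acc => F a + acc) 0 l.

Section RealSums.
Context {A : Type}.
Implicit Types (l : list A) (F G : A -> R).

Lemma Rsum_nil F : Rsum nil F = 0.
Proof. reflexivity. Qed.

Lemma Rsum_cons a l F : Rsum (a :: l) F = F a + Rsum l F.
Proof. reflexivity. Qed.

Lemma Rsum_ext l F G : (forall a, In a l -> F a = G a) -> Rsum l F = Rsum l G.
Proof.
  induction l; simpl; intros H; auto. rewrite H, IHl; auto.
Qed.

Lemma Rsum_app l1 l2 F : Rsum (l1 ++ l2) F = Rsum l1 F + Rsum l2 F.
Proof. induction l1; simpl; [ring|rewrite IHl1; ring]. Qed.

Lemma Rsum_plus l F G : Rsum l (fun a => F a + G a) = Rsum l F + Rsum l G.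
Proof. induction l; simpl; [ring|rewrite IHl; ring]. Qed.

Lemma Rsum_minus l F G : Rsum l (fun a => F a - G a) = Rsum l F - Rsum l G.
Proof. induction l; simpl; [ring|rewrite IHl; ring]. Qed.

Lemma Rsum_scal l c F : Rsum l (fun a => c * F a) = c * Rsum l F.
Proof. induction l; simpl; [ring|rewrite IHl; ring]. Qed.

Lemma Rsum_mult_r l F c : Rsum l F * c = Rsum l (fun x => F x * c).
Proof. induction l; simpl; [ring|rewrite <- IHl; ring]. Qed.

Lemma Rsum_const l c : Rsum l (fun _ => c) = INR (length l) * c.
Proof.
  induction l; simpl length; [simpl; ring|rewrite S_INR; simpl; rewrite IHl; ring].
Qed.

Lemma Rsum_zero l : Rsum l (fun _ => 0) = 0.
Proof. rewrite Rsum_const; ring. Qed.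

Lemma Rsum_filter l p F :
  Rsum (filter p l) F = Rsum l (fun a => if p a then F a else 0).
Proof. induction l; simpl; auto. destruct (p a); simpl; rewrite IHl; ring. Qed.

End RealSums.

Lemma Rsum_pairs (la lb : list Z) F :
  Rsum (pairs la lb) F = Rsum la (fun a => Rsum lb (fun b => F (a, b))).
Proof.
  induction la; simpl; auto. unfold pairs in *; simpl. rewrite Rsum_app, IHla.
  f_equal. clear. induction lb; simpl; auto. now rewrite IHlb.
Qed.

Lemma In_pairs la lb x y : In (x, y) (pairs la lb) <-> In x la /\ In y lb.
Proof.
  unfold pairs. rewrite in_flat_map. split.
  - intros [a [Ha Hb]]. apply in_map_iff in Hb as [b [E Hb]]. inversion E; subst; auto.
  - intros [Hx Hy]. exists x. split; auto. apply in_map_iff. exists y; auto.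
Qed.

Lemma Zrange_S a n : Zrange a (S n) = a :: Zrange (a + 1) n.
Proof.
  unfold Zrange. simpl. f_equal; [lia|]. rewrite <- seq_shift, map_map.
  apply map_ext. intro k. lia.
Qed.

Lemma Zrange_app a n k : Zrange a (n + k) = Zrange a n ++ Zrange (a + Z.of_nat n) k.
Proof.
  revert a. induction n; intro a.
  - unfold Zrange at 2. simpl. f_equal. lia.
  - rewrite Nat.add_succ_l, !Zrange_S, IHn, <- app_comm_cons.
    do 3 f_equal. lia.
Qed.

Lemma Zrange_length a n : length (Zrange a n) = n.
Proof. unfold Zrange. now rewrite length_map, length_seq. Qed.

Lemma In_Zrange a n z : In z (Zrange a n) <-> (a <= z < a + Z.of_nat n)%Z.
Proof.
  unfold Zrange. rewrite in_map_iff. split.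
  - intros [k [<- Hk]]. apply in_seq in Hk. lia.
  - intros H. exists (Z.to_nat (z - a)). split; [lia|]. apply in_seq. lia.
Qed.

Lemma Rsum_delta_out (l : list Z) z0 (F : Z -> R) : ~ In z0 l ->
  Rsum l (fun z => if (z =? z0)%Z then F z else 0) = 0.
Proof.
  induction l as [|z l IH]; simpl; intro H; [reflexivity|].
  destruct (Z.eqb_spec z z0); [tauto|]. rewrite IH; [ring|tauto].
Qed.

Lemma Rsum_delta a n z0 (F : Z -> R) : (a <= z0 < a + Z.of_nat n)%Z ->
  Rsum (Zrange a n) (fun z => if (z =? z0)%Z then F z else 0) = F z0.
Proof.
  revert a. induction n as [|n IH]; intros a Ha; [lia|].
  rewrite Zrange_S. simpl. destruct (Z.eqb_spec a z0) as [<-|Ne].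
  - rewrite Rsum_delta_out; [ring|]. rewrite In_Zrange. lia.
  - rewrite IH; [ring|lia].
Qed.

(** * Sums of cosines along arithmetic progressions *)

(* Telescoping: [2 sin(t/2) cos(l t + phi) = sin((l+1/2) t + phi) - sin((l-1/2) t + phi)]. *)
Lemma cos_sum_telescope (t phi : R) (n : nat) (a : Z) :
  2 * sin (t / 2) * Rsum (Zrange a n) (fun l => cos (IZR l * t + phi)) =
  sin ((IZR a + INR n - 1/2) * t + phi) - sin ((IZR a - 1/2) * t + phi).
Proof.
  revert a. induction n as [|n IH]; intro a.
  - simpl. ring_simplify. replace (IZR a + 0 - 1/2) with (IZR a - 1/2) by ring. ring.
  - rewrite Zrange_S. simpl Rsum. rewrite Rmult_plus_distr_l.
    change (fold_right (fun l acc => cos (IZR l * t + phi) + acc) 0 (Zrange (a + 1) n))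
      with (Rsum (Zrange (a + 1) n) (fun l => cos (IZR l * t + phi))).
    rewrite IH, S_INR, plus_IZR.
    replace ((IZR a + 1 - 1/2) * t + phi) with ((IZR a * t + phi) + t / 2) by field.
    replace ((IZR a - 1/2) * t + phi) with ((IZR a * t + phi) - t / 2) by field.
    replace ((IZR a + 1 + INR n - 1/2) * t + phi)
      with ((IZR a + (INR n + 1) - 1/2) * t + phi) by ring.
    rewrite (sin_plus (IZR a * t + phi)), (sin_minus (IZR a * t + phi)). ring.
Qed.

Lemma cos_sum_period (n : nat) (a e : Z) (phi t : R) : (0 < n)%nat ->
  t = 2 * PI * IZR e / INR n ->
  Rsum (Zrange a n) (fun l => cos (IZR l * t + phi)) =
  if (e mod Z.of_nat n =? 0)%Z then INR n * cos phi else 0.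
Proof.
  intros Hn ->. assert (HnR : 0 < INR n) by (apply lt_0_INR; lia).
  destruct (Z.eqb_spec (e mod Z.of_nat n) 0) as [E|E].
  - apply Zmod_divides in E as [q ->]; [|lia].
    rewrite (Rsum_ext _ _ (fun _ => cos phi)), Rsum_const, Zrange_length; [reflexivity|].
    intros l _. rewrite mult_IZR, <- INR_IZR_INZ.
    replace (IZR l * (2 * PI * (INR n * IZR q) / INR n) + phi)
      with (phi + 2 * IZR (l * q) * PI) by (rewrite mult_IZR; field; lra).
    apply cos_add_2kPI.
  - set (t := 2 * PI * IZR e / INR n).
    assert (Hs : sin (t / 2) <> 0).
    { intro H. unfold t in H.
      replace (2 * PI * IZR e / INR n / 2) with (PI * IZR e / INR n) in H by (field; lra).
      apply sin_PI_frac_eq_0 in H as [k Hk]; [|lra]. apply E.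
      rewrite INR_IZR_INZ, <- mult_IZR in Hk. apply eq_IZR in Hk as ->. apply Z_mod_mult. }
    pose proof (cos_sum_telescope t phi n a) as T.
    replace ((IZR a + INR n - 1/2) * t + phi)
      with (((IZR a - 1/2) * t + phi) + 2 * IZR e * PI) in T by (unfold t; field; lra).
    rewrite sin_add_2kPI in T.
    apply Rmult_eq_reg_l with (2 * sin (t / 2)); [|apply Rmult_integral_contrapositive; lra].
    rewrite T. ring.
Qed.

Lemma mod_eqb0_small (x n : Z) : (0 < n)%Z -> (- n < x < n)%Z ->
  (x mod n =? 0)%Z = (x =? 0)%Z.
Proof.
  intros Hn Hx. destruct (Z.eqb_spec x 0) as [->|Nx].
  - now rewrite Z.mod_0_l by lia.
  - apply Z.eqb_neq. intro E. apply Zmod_divides in E as [c ->]; [|lia].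
    assert (c <= -1 \/ c = 0 \/ c >= 1)%Z as [H|[H|H]] by lia; nia.
Qed.

Lemma mod_eqb0_interval (x n : Z) : (0 < n)%Z -> (0 <= x <= n)%Z ->
  (x mod n =? 0)%Z = ((x =? 0) || (x =? n))%Z.
Proof.
  intros Hn Hx. destruct (Z.eqb_spec x 0) as [->|N0]; [now rewrite Z.mod_0_l by lia|].
  destruct (Z.eqb_spec x n) as [->|Nn]; [now rewrite Z.mod_same by lia|].
  apply Z.eqb_neq. intro E. apply Zmod_divides in E as [c ->]; [|lia].
  assert (c <= 0 \/ c = 1 \/ c >= 2)%Z as [H|[H|H]] by lia; nia.
Qed.

(* Trapezoidal weights on the nodes [0, ..., M]: [1] at the end points, [2] inside. *)
Definition tau (M : nat) (k : Z) : R :=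
  if ((k =? 0) || (k =? Z.of_nat M))%Z then 1 else 2.

Lemma trapezoid_sum_ends (M : nat) (C : Z -> R) : (0 < M)%nat ->
  Rsum (Zrange 0 (S M)) (fun k => tau M k * C k) =
  2 * Rsum (Zrange 0 (S M)) C - C 0%Z - C (Z.of_nat M).
Proof.
  intro HM. rewrite (Rsum_ext _ _ (fun k => (2 * C k - (if (k =? 0)%Z then C k else 0))
                                  - (if (k =? Z.of_nat M)%Z then C k else 0))).
  - rewrite !Rsum_minus, Rsum_scal, !Rsum_delta by lia. reflexivity.
  - intros k _. unfold tau.
    destruct (Z.eqb_spec k 0); destruct (Z.eqb_spec k (Z.of_nat M)); simpl; try lia; ring.
Qed.

Lemma cos_sum_half_period (M : nat) (j : Z) : (0 < M)%nat ->
  (j mod (2 * Z.of_nat M) <> 0)%Z ->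
  Rsum (Zrange 0 (S M)) (fun k => cos (IZR k * IZR j * PI / INR M)) =
  (1 + cos (IZR j * PI)) / 2.
Proof.
  intros HM E. assert (HMR : 0 < INR M) by (apply lt_0_INR; lia).
  set (t := PI * IZR j / INR M).
  assert (Hs : sin (t / 2) <> 0).
  { intro H. unfold t in H.
    replace (PI * IZR j / INR M / 2) with (PI * IZR j / (2 * INR M)) in H by (field; lra).
    apply sin_PI_frac_eq_0 in H as [k Hk]; [|lra]. apply E.
    rewrite INR_IZR_INZ in Hk.
    replace (IZR k * (2 * IZR (Z.of_nat M))) with (IZR (k * (2 * Z.of_nat M))) in Hk
      by (rewrite !mult_IZR; reflexivity).
    apply eq_IZR in Hk as ->. apply Z_mod_mult. }
  pose proof (cos_sum_telescope t 0 (S M) 0) as T.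
  rewrite (Rsum_ext _ (fun l => cos (IZR l * t + 0)) (fun k => cos (IZR k * IZR j * PI / INR M)))
    in T by (intros k _; unfold t; f_equal; field; lra).
  apply Rmult_eq_reg_l with (2 * sin (t / 2)); [|apply Rmult_integral_contrapositive; lra].
  rewrite T, S_INR.
  replace ((IZR 0 + (INR M + 1) - 1 / 2) * t + 0) with (IZR j * PI + t / 2)
    by (unfold t; simpl; field; lra).
  replace ((IZR 0 - 1 / 2) * t + 0) with (- (t / 2)) by (simpl; field).
  rewrite sin_plus, sin_int_PI, sin_neg. field.
Qed.

Lemma cos_sum_trapezoid (M : nat) (j : Z) : (0 < M)%nat ->
  Rsum (Zrange 0 (S M)) (fun k => tau M k * cos (IZR k * IZR j * PI / INR M)) =
  if (j mod (2 * Z.of_nat M) =? 0)%Z then 2 * INR M else 0.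
Proof.
  intro HM. assert (HMR : 0 < INR M) by (apply lt_0_INR; lia).
  rewrite trapezoid_sum_ends by auto.
  replace (cos (IZR (Z.of_nat M) * IZR j * PI / INR M)) with (cos (IZR j * PI))
    by (rewrite <- INR_IZR_INZ; f_equal; field; lra).
  replace (cos (IZR 0 * IZR j * PI / INR M)) with 1 by (rewrite <- cos_0; f_equal; simpl; field; lra).
  destruct (Z.eqb_spec (j mod (2 * Z.of_nat M)) 0) as [E|E].
  - (* [j = 2 M q]: every node contributes [1] *)
    apply Zmod_divides in E as [q Hq]; [|lia].
    assert (Hone : forall k, cos (IZR k * IZR j * PI / INR M) = 1).
    { intro k. rewrite Hq, !mult_IZR, <- INR_IZR_INZ.
      replace (IZR k * (2 * INR M * IZR q) * PI / INR M) with (0 + 2 * IZR (k * q) * PI)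
        by (rewrite mult_IZR; field; lra). rewrite cos_add_2kPI. apply cos_0. }
    rewrite (Rsum_ext _ _ (fun _ => 1)) by auto.
    rewrite Rsum_const, Zrange_length, S_INR.
    replace (cos (IZR j * PI)) with 1 by (rewrite <- (Hone (Z.of_nat M)), <- INR_IZR_INZ;
                                          f_equal; field; lra).
    ring.
  - rewrite cos_sum_half_period by auto. field.
Qed.

Lemma cos_cos_sum_trapezoid (M : nat) (i j : Z) : (0 < M)%nat ->
  Rsum (Zrange 0 (S M)) (fun k => tau M k *
    (cos (IZR k * IZR (i + j) * PI / (2 * INR M)) *
     cos (IZR k * IZR (i - j) * PI / (2 * INR M)))) =
  INR M * ((if (i mod (2 * Z.of_nat M) =? 0)%Z then 1 else 0) +
           (if (j mod (2 * Z.of_nat M) =? 0)%Z then 1 else 0)).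
Proof.
  intro HM. assert (HMR : 0 < INR M) by (apply lt_0_INR; lia).
  rewrite (Rsum_ext _ _ (fun k => / 2 * (tau M k * cos (IZR k * IZR j * PI / INR M)) +
                                  / 2 * (tau M k * cos (IZR k * IZR i * PI / INR M)))).
  - rewrite Rsum_plus, !Rsum_scal, !cos_sum_trapezoid by lia.
    do 2 destruct (_ mod _ =? 0)%Z; field.
  - intros k _. rewrite cos_mul_cos, plus_IZR, minus_IZR.
    replace (IZR k * (IZR i + IZR j) * PI / (2 * INR M) - IZR k * (IZR i - IZR j) * PI / (2 * INR M))
      with (IZR k * IZR j * PI / INR M) by (field; lra).
    replace (IZR k * (IZR i + IZR j) * PI / (2 * INR M) + IZR k * (IZR i - IZR j) * PI / (2 * INR M))
      with (IZR k * IZR i * PI / INR M) by (field; lra).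
    field.
Qed.

Lemma parity_cos_sum (a p : Z) (n : nat) (t phi : R) :
  Rsum (Zrange a n) (fun l => (if Z.even (p + l) then 1 else 0) * cos (IZR l * t + phi)) =
  / 2 * Rsum (Zrange a n) (fun l => cos (IZR l * t + phi)) +
  cos (IZR p * PI) / 4 * (Rsum (Zrange a n) (fun l => cos (IZR l * (t + PI) + phi)) +
                          Rsum (Zrange a n) (fun l => cos (IZR l * (t - PI) + phi))).
Proof.
  rewrite <- !Rsum_scal, <- Rsum_plus, <- Rsum_scal, <- Rsum_plus.
  apply Rsum_ext. intros l _. rewrite even_indicator, plus_IZR.
  rewrite Rmult_plus_distr_r, (cos_plus (IZR p * PI)), !sin_int_PI.
  replace (IZR l * (t + PI) + phi) with ((IZR l * t + phi) + IZR l * PI) by ring.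
  replace (IZR l * (t - PI) + phi) with ((IZR l * t + phi) - IZR l * PI) by ring.
  rewrite (cos_plus (IZR l * t + phi)), (cos_minus (IZR l * t + phi)), !sin_int_PI. field.
Qed.

Lemma parity_cos_sum_period (a p e : Z) (N : nat) (t phi : R) : (0 < N)%nat ->
  (- Z.of_nat N < e < Z.of_nat N)%Z -> t = IZR e * PI / INR N ->
  Rsum (Zrange a (2 * N))
    (fun l => (if Z.even (p + l) then 1 else 0) * cos (IZR l * t + phi)) =
  if (e =? 0)%Z then INR N * cos phi else 0.
Proof.
  intros HN He ->. assert (HNR : 0 < INR N) by (apply lt_0_INR; lia).
  assert (H2N : (0 < 2 * N)%nat) by lia.
  rewrite parity_cos_sum.
  rewrite (cos_sum_period _ _ e _ _ H2N), (cos_sum_period _ _ (e + Z.of_nat N) _ _ H2N),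
          (cos_sum_period _ _ (e - Z.of_nat N) _ _ H2N).
  2-4: rewrite ?plus_IZR, ?minus_IZR, <- ?INR_IZR_INZ, mult_INR; simpl (INR 2); field; lra.
  rewrite Nat2Z.inj_mul, !mod_eqb0_small by lia.
  replace (e + Z.of_nat N =? 0)%Z with false by (symmetry; apply Z.eqb_neq; lia).
  replace (e - Z.of_nat N =? 0)%Z with false by (symmetry; apply Z.eqb_neq; lia).
  destruct (e =? 0)%Z; rewrite ?mult_INR; simpl (INR 2); field.
Qed.

Lemma inGamma_spec m1 m2 g1 g2 : inGamma m1 m2 (g1, g2) = true <->
  (0 <= g1 <= 2 * Z.of_nat m1 /\ - Z.of_nat m2 < g2 <= Z.of_nat m2)%Z /\
  Z.even (g1 + g2) = true.
Proof. unfold inGamma. rewrite !andb_true_iff, !Z.leb_le, !Z.ltb_lt. tauto. Qed.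

Lemma inI_spec m1 m2 i1 i2 : inI m1 m2 (i1, i2) = true <->
  (0 <= i1 <= Z.of_nat m1 /\ - 2 * Z.of_nat m2 < i2 <= 2 * Z.of_nat m2)%Z /\
  (i1 = Z.of_nat m1 -> i2 <= 0)%Z /\ Z.even (i1 + i2) = true.
Proof.
  unfold inI. rewrite !andb_true_iff, !Z.leb_le, !Z.ltb_lt.
  destruct (Z.eqb_spec i1 (Z.of_nat m1)); [rewrite Z.leb_le|]; intuition.
Qed.

Lemma In_Gammaset m1 m2 g : In g (Gammaset m1 m2) -> inGamma m1 m2 g = true.
Proof. unfold Gammaset. rewrite filter_In. tauto. Qed.

Lemma In_Iset m1 m2 i : In i (Iset m1 m2) -> inI m1 m2 i = true.
Proof. unfold Iset. rewrite filter_In. tauto. Qed.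

Lemma inI_row m1 m2 i1 i2 : (0 <= i1 <= Z.of_nat m1)%Z ->
  (- 2 * Z.of_nat m2 < i2 <= 2 * Z.of_nat m2)%Z -> (i1 = Z.of_nat m1 -> i2 <= 0)%Z ->
  inI m1 m2 (i1, i2) = Z.even (i1 + i2).
Proof.
  intros H1 H2 H3. destruct (inI m1 m2 (i1, i2)) eqn:E.
  - now apply inI_spec in E as [_ [_ ->]].
  - destruct (Z.even (i1 + i2)) eqn:P; [|reflexivity].
    rewrite <- E. apply inI_spec. tauto.
Qed.

Lemma inGamma_row m1 m2 g1 g2 : (0 <= g1 <= 2 * Z.of_nat m1)%Z ->
  (- Z.of_nat m2 < g2 <= Z.of_nat m2)%Z -> inGamma m1 m2 (g1, g2) = Z.even (g1 + g2).
Proof.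
  intros H1 H2. destruct (inGamma m1 m2 (g1, g2)) eqn:E.
  - now apply inGamma_spec in E as [_ ->].
  - destruct (Z.even (g1 + g2)) eqn:P; [|reflexivity].
    rewrite <- E. apply inGamma_spec. tauto.
Qed.

Lemma Rsum_Iset m1 m2 F : Rsum (Iset m1 m2) F =
  Rsum (Zrange 0 (S m1)) (fun i1 => Rsum (Zrange (- 2 * Z.of_nat m2 + 1) (4 * m2))
     (fun i2 => if inI m1 m2 (i1, i2) then F (i1, i2) else 0)).
Proof. unfold Iset. now rewrite Rsum_filter, Rsum_pairs. Qed.

Lemma Rsum_Gammaset m1 m2 F : Rsum (Gammaset m1 m2) F =
  Rsum (Zrange 0 (S (2 * m1))) (fun g1 => Rsum (Zrange (- Z.of_nat m2 + 1) (2 * m2))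
     (fun g2 => (if Z.even (g1 + g2) then 1 else 0) * F (g1, g2))).
Proof.
  unfold Gammaset. rewrite Rsum_filter, Rsum_pairs.
  apply Rsum_ext. intros g1 Hg1. apply Rsum_ext. intros g2 Hg2.
  apply In_Zrange in Hg1, Hg2. rewrite Nat2Z.inj_succ, Nat2Z.inj_mul in Hg1.
  rewrite Nat2Z.inj_mul in Hg2. rewrite inGamma_row by lia. destruct Z.even; ring.
Qed.

(** * Discrete orthogonality on [I^(m)] *)

Section IsetRows.
Variables (m1 m2 : nat) (Hm1 : (0 < m1)%nat) (Hm2 : (0 < m2)%nat).

(* On an interior row all [i2] of the parity of
   [i1] occur; on the last row only [-2m2 < i2 <= 0] occur, so [d] must be even. *)
Lemma Iset_interior_row_sum i1 d phi :
  (0 <= i1 < Z.of_nat m1)%Z -> (- 2 * Z.of_nat m2 < d < 2 * Z.of_nat m2)%Z ->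
  Rsum (Zrange (- 2 * Z.of_nat m2 + 1) (4 * m2))
    (fun i2 => if inI m1 m2 (i1, i2)
               then weight m1 m2 (i1, i2) * cos (IZR i2 * (IZR d * PI / (2 * INR m2)) + phi)
               else 0) =
  tau m1 i1 / (2 * INR m1) * (if (d =? 0)%Z then cos phi else 0).
Proof.
  intros Hi1 Hd.
  assert (Hm1R : 0 < INR m1) by (apply lt_0_INR; lia).
  assert (Hm2R : 0 < INR m2) by (apply lt_0_INR; lia).
  rewrite (Rsum_ext _ _ (fun i2 => weight m1 m2 (i1, 0%Z) * ((if Z.even (i1 + i2) then 1 else 0) *
                                   cos (IZR i2 * (IZR d * PI / (2 * INR m2)) + phi)))).
  2:{ intros i2 Hi2%In_Zrange. rewrite Nat2Z.inj_mul in Hi2.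
      rewrite inI_row by lia. unfold weight. cbn [fst]. destruct (Z.even (i1 + i2)); ring. }
  replace (4 * m2)%nat with (2 * (2 * m2))%nat by lia.
  rewrite Rsum_scal, (parity_cos_sum_period _ _ d)
    by (lia || (rewrite mult_INR; simpl (INR 2); field; lra)).
  unfold weight, tau. cbn [fst]. replace (i1 =? Z.of_nat m1)%Z with false by lia.
  destruct (Z.eqb_spec i1 0); destruct (d =? 0)%Z; rewrite ?mult_INR; simpl; field; lra.
Qed.

Lemma Iset_last_row_sum d phi :
  (- 2 * Z.of_nat m2 < d < 2 * Z.of_nat m2)%Z -> Z.even d = true ->
  Rsum (Zrange (- 2 * Z.of_nat m2 + 1) (4 * m2))
    (fun i2 => if inI m1 m2 (Z.of_nat m1, i2)
               then weight m1 m2 (Z.of_nat m1, i2) *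
                    cos (IZR i2 * (IZR d * PI / (2 * INR m2)) + phi)
               else 0) =
  tau m1 (Z.of_nat m1) / (2 * INR m1) * (if (d =? 0)%Z then cos phi else 0).
Proof.
  intros Hd [h ->]%Z.even_spec.
  assert (Hm1R : 0 < INR m1) by (apply lt_0_INR; lia).
  assert (Hm2R : 0 < INR m2) by (apply lt_0_INR; lia).
  replace (4 * m2)%nat with (2 * m2 + 2 * m2)%nat by lia.
  rewrite Zrange_app, Rsum_app.
  rewrite (Rsum_ext (Zrange (_ + Z.of_nat (2 * m2)) _) _ (fun _ => 0)), Rsum_zero, Rplus_0_r.
  2:{ intros i2 Hi2%In_Zrange. destruct (inI m1 m2 (Z.of_nat m1, i2)) eqn:E; [|reflexivity].
      apply inI_spec in E. rewrite Nat2Z.inj_mul in Hi2. lia. }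
  rewrite (Rsum_ext _ _ (fun i2 => weight m1 m2 (Z.of_nat m1, 0%Z) *
     ((if Z.even (Z.of_nat m1 + i2) then 1 else 0) *
      cos (IZR i2 * (IZR (2 * h) * PI / (2 * INR m2)) + phi)))).
  2:{ intros i2 Hi2%In_Zrange. rewrite Nat2Z.inj_mul in Hi2.
      rewrite inI_row by lia. unfold weight. cbn [fst].
      destruct (Z.even (Z.of_nat m1 + i2)); ring. }
  rewrite Rsum_scal, (parity_cos_sum_period _ _ h) by (lia || (rewrite mult_IZR; field; lra)).
  unfold weight, tau. cbn [fst].
  rewrite Z.eqb_refl, orb_true_r. replace (Z.of_nat m1 =? 0)%Z with false by lia.
  destruct (Z.eqb_spec h 0); destruct (Z.eqb_spec (2 * h) 0); try lia; field; lra.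
Qed.

Lemma Iset_row_sum i1 d phi :
  (0 <= i1 <= Z.of_nat m1)%Z -> (- 2 * Z.of_nat m2 < d < 2 * Z.of_nat m2)%Z ->
  (i1 = Z.of_nat m1 -> Z.even d = true) ->
  Rsum (Zrange (- 2 * Z.of_nat m2 + 1) (4 * m2))
    (fun i2 => if inI m1 m2 (i1, i2)
               then weight m1 m2 (i1, i2) * cos (IZR i2 * (IZR d * PI / (2 * INR m2)) + phi)
               else 0) =
  tau m1 i1 / (2 * INR m1) * (if (d =? 0)%Z then cos phi else 0).
Proof.
  intros Hi1 Hd Hlast. destruct (Z.eq_dec i1 (Z.of_nat m1)) as [->|Em].
  - now apply Iset_last_row_sum, Hlast.
  - apply Iset_interior_row_sum; lia.
Qed.

Lemma Iset_cos_sum (u : Z -> R) d phi :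
  (- 2 * Z.of_nat m2 < d < 2 * Z.of_nat m2)%Z ->
  (u (Z.of_nat m1) <> 0 -> Z.even d = true) ->
  Rsum (Iset m1 m2) (fun i => weight m1 m2 i *
    (u (fst i) * cos (IZR (snd i) * (IZR d * PI / (2 * INR m2)) + phi))) =
  (if (d =? 0)%Z then cos phi else 0) / (2 * INR m1) *
    Rsum (Zrange 0 (S m1)) (fun i1 => tau m1 i1 * u i1).
Proof.
  intros Hd Hlast. assert (Hm1R : 0 < INR m1) by (apply lt_0_INR; lia).
  rewrite Rsum_Iset, <- Rsum_scal. apply Rsum_ext. intros i1 Hi1%In_Zrange.
  rewrite Nat2Z.inj_succ in Hi1. cbn [fst snd].
  rewrite (Rsum_ext _ _ (fun i2 => u i1 * (if inI m1 m2 (i1, i2)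
     then weight m1 m2 (i1, i2) * cos (IZR i2 * (IZR d * PI / (2 * INR m2)) + phi) else 0))).
  2:{ intros i2 _. destruct inI; ring. }
  rewrite Rsum_scal.
  destruct (Req_EM_T (u i1) 0) as [->|Nu]; [ring|].
  rewrite Iset_row_sum by (try lia; intros ->; auto).
  field. lra.
Qed.

End IsetRows.

(* Squared discrete norm of [chi_gamma]; it only depends on [gamma1]. *)
Definition gamma_norm2 (m1 : nat) (g1 : Z) : R :=
  if ((g1 =? 0) || (g1 =? 2 * Z.of_nat m1))%Z then 1 else / 2.

Lemma gamma_norm2_pos m1 g1 : 0 < gamma_norm2 m1 g1.
Proof. unfold gamma_norm2. destruct orb; lra. Qed.

(* [cos (a m1 PI / 2m1) = 0] for odd [a]: the last row of nodes is a zero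
   of the odd-degree Chebyshev polynomials. *)
Lemma cos_last_node m1 a : (0 < m1)%nat -> Z.even a = false ->
  cos (IZR a * IZR (Z.of_nat m1) * PI / (2 * INR m1)) = 0.
Proof.
  intros Hm1 Ha. assert (0 < INR m1) by (apply lt_0_INR; lia).
  rewrite <- INR_IZR_INZ, <- (cos_odd_half_PI a Ha). f_equal. field. lra.
Qed.

Lemma last_row_parity m1 a1 a2 b1 b2 : (0 < m1)%nat ->
  Z.even (a1 + a2) = true -> Z.even (b1 + b2) = true ->
  cos (IZR a1 * IZR (Z.of_nat m1) * PI / (2 * INR m1)) *
  cos (IZR b1 * IZR (Z.of_nat m1) * PI / (2 * INR m1)) <> 0 ->
  Z.even (a2 - b2) = true.
Proof.
  intros Hm1 Pa Pb Hu. destruct (Z.even a1) eqn:E1; [destruct (Z.even b1) eqn:E2|].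
  - rewrite Z.even_sub. rewrite Z.even_add, E1 in Pa. rewrite Z.even_add, E2 in Pb.
    destruct (Z.even a2), (Z.even b2); simpl in *; congruence.
  - exfalso. apply Hu. rewrite (cos_last_node m1 b1 Hm1 E2). ring.
  - exfalso. apply Hu. rewrite (cos_last_node m1 a1 Hm1 E1). ring.
Qed.

Lemma chi_ortho_sum m1 m2 a1 a2 b1 b2 phi : (0 < m1)%nat -> (0 < m2)%nat ->
  inGamma m1 m2 (a1, a2) = true -> inGamma m1 m2 (b1, b2) = true ->
  Rsum (Iset m1 m2) (fun i => weight m1 m2 i *
     (cos (IZR a1 * IZR (fst i) * PI / (2 * INR m1)) *
      cos (IZR b1 * IZR (fst i) * PI / (2 * INR m1)) *
      cos (IZR (snd i) * (IZR (a2 - b2) * PI / (2 * INR m2)) + phi))) =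
  if ((a1 =? b1) && (a2 =? b2))%Z then gamma_norm2 m1 a1 * cos phi else 0.
Proof.
  intros Hm1 Hm2 [[Ha1 Ha2] Pa]%inGamma_spec [[Hb1 Hb2] Pb]%inGamma_spec.
  assert (Hm1R : 0 < INR m1) by (apply lt_0_INR; lia).
  rewrite (Iset_cos_sum m1 m2 Hm1 Hm2 (fun i1 => cos (IZR a1 * IZR i1 * PI / (2 * INR m1)) *
                                         cos (IZR b1 * IZR i1 * PI / (2 * INR m1))))
    by (lia || now apply (last_row_parity m1 a1 a2 b1 b2)).
  destruct (Z.eqb_spec (a2 - b2) 0) as [Ed|Nd].
  2:{ replace (a2 =? b2)%Z with false by lia. rewrite andb_false_r. unfold Rdiv. ring. }
  assert (b2 = a2) as -> by lia. rewrite Z.eqb_refl, andb_true_r.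
  (* [a1 = s + e] and [b1 = s - e] with [0 <= s <= 2 m1] and [|e| <= m1] *)
  destruct (proj1 (Z.even_spec (a1 + b1))) as [s Hs].
  { rewrite Z.even_add in *. destruct (Z.even a1), (Z.even b1), (Z.even a2);
    simpl in *; congruence. }
  set (e := (a1 - s)%Z).
  rewrite (Rsum_ext _ _ (fun k => tau m1 k * (cos (IZR k * IZR (s + e) * PI / (2 * INR m1)) *
                                              cos (IZR k * IZR (s - e) * PI / (2 * INR m1))))).
  2:{ intros k _. replace (s + e)%Z with a1 by lia. replace (s - e)%Z with b1 by lia.
      f_equal. f_equal; f_equal; field; lra. }
  rewrite cos_cos_sum_trapezoid, (mod_eqb0_interval s), (mod_eqb0_small e) by lia.
  unfold gamma_norm2.
  destruct (Z.eqb_spec a1 b1); destruct (Z.eqb_spec e 0); try lia;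
  destruct (Z.eqb_spec s 0); destruct (Z.eqb_spec s (2 * Z.of_nat m1));
  destruct (Z.eqb_spec a1 0); destruct (Z.eqb_spec a1 (2 * Z.of_nat m1));
  simpl; try lia; field; lra.
Qed.

(** * Dual orthogonality on [Gamma_square] *)

Lemma inv_gamma_norm2 m1 g1 : / gamma_norm2 m1 g1 = tau (2 * m1) g1.
Proof.
  unfold gamma_norm2, tau. rewrite Nat2Z.inj_mul. simpl (Z.of_nat 2).
  destruct orb; field.
Qed.

(* A sum over [Gamma_square] of [u(g1) cos (g2 t + phi) / ||chi_g||^2] splits,
   through the parity constraint [g1 + g2 even], into products of one-dimensional
   sums: trapezoidal sums in [g1] and plain cosine sums [Srow] in [g2]. *)
Lemma Gammaset_cos_sum m1 m2 (u : Z -> R) t phi :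
  let Srow s := Rsum (Zrange (- Z.of_nat m2 + 1) (2 * m2)) (fun l => cos (IZR l * s + phi)) in
  Rsum (Gammaset m1 m2)
    (fun g => u (fst g) / gamma_norm2 m1 (fst g) * cos (IZR (snd g) * t + phi)) =
  / 2 * Srow t * Rsum (Zrange 0 (S (2 * m1))) (fun g1 => tau (2 * m1) g1 * u g1) +
  / 4 * (Srow (t + PI) + Srow (t - PI)) *
    Rsum (Zrange 0 (S (2 * m1))) (fun g1 => tau (2 * m1) g1 * (u g1 * cos (IZR g1 * PI))).
Proof.
  intro Srow. rewrite Rsum_Gammaset, <- !Rsum_scal, <- Rsum_plus.
  apply Rsum_ext. intros g1 _. cbn [fst snd].
  rewrite (Rsum_ext _ _ (fun g2 => u g1 / gamma_norm2 m1 g1 *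
     ((if Z.even (g1 + g2) then 1 else 0) * cos (IZR g2 * t + phi)))).
  2:{ intros g2 _. ring. }
  rewrite Rsum_scal, parity_cos_sum. unfold Rdiv. rewrite inv_gamma_norm2.
  fold (Srow t) (Srow (t + PI)) (Srow (t - PI)). ring.
Qed.

Lemma node_cos_cos_sum m1 i j : (0 < m1)%nat ->
  Rsum (Zrange 0 (S (2 * m1))) (fun g1 => tau (2 * m1) g1 *
    (cos (IZR g1 * IZR i * PI / (2 * INR m1)) * cos (IZR g1 * IZR j * PI / (2 * INR m1)))) =
  2 * INR m1 * ((if ((i + j) mod (4 * Z.of_nat m1) =? 0)%Z then 1 else 0) +
                (if ((i - j) mod (4 * Z.of_nat m1) =? 0)%Z then 1 else 0)).
Proof.
  intro Hm1. assert (0 < INR m1) by (apply lt_0_INR; lia).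
  rewrite (Rsum_ext _ _ (fun k => tau (2 * m1) k *
    (cos (IZR k * IZR ((i + j) + (i - j)) * PI / (2 * INR (2 * m1))) *
     cos (IZR k * IZR ((i + j) - (i - j)) * PI / (2 * INR (2 * m1)))))).
  - rewrite cos_cos_sum_trapezoid, mult_INR, Nat2Z.inj_mul by lia.
    replace (2 * (Z.of_nat 2 * Z.of_nat m1))%Z with (4 * Z.of_nat m1)%Z by lia.
    simpl (INR 2). ring.
  - intros k _. rewrite mult_INR. simpl (INR 2).
    replace (IZR (i + j + (i - j))) with (2 * IZR i) by (rewrite plus_IZR, plus_IZR, minus_IZR; ring).
    replace (IZR (i + j - (i - j))) with (2 * IZR j) by (rewrite minus_IZR, plus_IZR, minus_IZR; ring).
    f_equal. f_equal; f_equal; field; lra.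
Qed.

Section DualSums.
Variables (m1 m2 : nat) (Hm1 : (0 < m1)%nat) (Hm2 : (0 < m2)%nat).

(* The two trapezoidal sums appearing in [Gammaset_cos_sum], at node rows
   [0 <= i1, j1 <= m1]. *)
Lemma node_row_sum i1 j1 : (0 <= i1 <= Z.of_nat m1)%Z -> (0 <= j1 <= Z.of_nat m1)%Z ->
  Rsum (Zrange 0 (S (2 * m1))) (fun g1 => tau (2 * m1) g1 *
    (cos (IZR g1 * IZR i1 * PI / (2 * INR m1)) * cos (IZR g1 * IZR j1 * PI / (2 * INR m1)))) =
  if (i1 =? j1)%Z then 2 * INR m1 * (1 + if (i1 =? 0)%Z then 1 else 0) else 0.
Proof.
  intros Hi Hj. rewrite node_cos_cos_sum, !mod_eqb0_small by lia.
  destruct (Z.eqb_spec i1 j1); destruct (Z.eqb_spec i1 0);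
  destruct (Z.eqb_spec (i1 + j1) 0); destruct (Z.eqb_spec (i1 - j1) 0); try lia; ring.
Qed.

Lemma node_row_alt_sum i1 j1 : (0 <= i1 <= Z.of_nat m1)%Z -> (0 <= j1 <= Z.of_nat m1)%Z ->
  Rsum (Zrange 0 (S (2 * m1))) (fun g1 => tau (2 * m1) g1 *
    (cos (IZR g1 * IZR i1 * PI / (2 * INR m1)) * cos (IZR g1 * IZR j1 * PI / (2 * INR m1)) *
     cos (IZR g1 * PI))) =
  if ((i1 =? Z.of_nat m1) && (j1 =? Z.of_nat m1))%Z then 2 * INR m1 else 0.
Proof.
  intros Hi Hj. assert (0 < INR m1) by (apply lt_0_INR; lia).
  (* [cos (g1 j1 PI / 2m1) (-1)^g1 = cos (g1 (j1 + 2m1) PI / 2m1)] *)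
  rewrite (Rsum_ext _ _ (fun g1 => tau (2 * m1) g1 *
    (cos (IZR g1 * IZR i1 * PI / (2 * INR m1)) *
     cos (IZR g1 * IZR (j1 + 2 * Z.of_nat m1) * PI / (2 * INR m1))))).
  - rewrite node_cos_cos_sum, (mod_eqb0_interval (i1 + _)), (mod_eqb0_small (i1 - _)) by lia.
    destruct (Z.eqb_spec i1 (Z.of_nat m1)); destruct (Z.eqb_spec j1 (Z.of_nat m1));
    destruct (Z.eqb_spec (i1 + (j1 + 2 * Z.of_nat m1)) 0);
    destruct (Z.eqb_spec (i1 + (j1 + 2 * Z.of_nat m1)) (4 * Z.of_nat m1));
    destruct (Z.eqb_spec (i1 - (j1 + 2 * Z.of_nat m1)) 0); simpl; try lia; ring.
  - intros g1 _. rewrite plus_IZR, mult_IZR, <- INR_IZR_INZ.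
    replace (IZR g1 * (IZR j1 + 2 * INR m1) * PI / (2 * INR m1))
      with (IZR g1 * IZR j1 * PI / (2 * INR m1) + IZR g1 * PI) by (field; lra).
    rewrite (cos_plus (IZR g1 * IZR j1 * PI / (2 * INR m1))), sin_int_PI. ring.
Qed.

Lemma Gamma_col_sum h phi : (- 2 * Z.of_nat m2 < h < 2 * Z.of_nat m2)%Z ->
  Rsum (Zrange (- Z.of_nat m2 + 1) (2 * m2))
    (fun l => cos (IZR l * (IZR (2 * h) * PI / (2 * INR m2)) + phi)) =
  if (h =? 0)%Z then 2 * INR m2 * cos phi else 0.
Proof.
  intro Hh. assert (Hm2R : 0 < INR m2) by (apply lt_0_INR; lia).
  rewrite (cos_sum_period _ _ h), Nat2Z.inj_mul, mod_eqb0_small, mult_INR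
    by (lia || (rewrite mult_IZR, mult_INR; simpl (INR 2); field; lra)).
  reflexivity.
Qed.

Lemma Gamma_col_sum_shifted h phi : (- Z.of_nat m2 < h < Z.of_nat m2)%Z ->
  Rsum (Zrange (- Z.of_nat m2 + 1) (2 * m2))
    (fun l => cos (IZR l * (IZR (2 * h) * PI / (2 * INR m2) + PI) + phi)) +
  Rsum (Zrange (- Z.of_nat m2 + 1) (2 * m2))
    (fun l => cos (IZR l * (IZR (2 * h) * PI / (2 * INR m2) - PI) + phi)) = 0.
Proof.
  intro Hh. assert (Hm2R : 0 < INR m2) by (apply lt_0_INR; lia).
  rewrite (cos_sum_period _ _ (h + Z.of_nat m2)), (cos_sum_period _ _ (h - Z.of_nat m2))
    by (lia || (rewrite ?plus_IZR, ?minus_IZR, mult_IZR, mult_INR, <- INR_IZR_INZ;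
                simpl (INR 2); field; lra)).
  rewrite Nat2Z.inj_mul, !mod_eqb0_small by lia.
  replace (h + Z.of_nat m2 =? 0)%Z with false by lia.
  replace (h - Z.of_nat m2 =? 0)%Z with false by lia. ring.
Qed.

Lemma chi_dual_sum i1 i2 j1 j2 phi :
  inI m1 m2 (i1, i2) = true -> inI m1 m2 (j1, j2) = true ->
  Rsum (Gammaset m1 m2) (fun g =>
     cos (IZR (fst g) * IZR i1 * PI / (2 * INR m1)) *
     cos (IZR (fst g) * IZR j1 * PI / (2 * INR m1)) / gamma_norm2 m1 (fst g) *
     cos (IZR (snd g) * (IZR (i2 - j2) * PI / (2 * INR m2)) + phi)) =
  if ((i1 =? j1) && (i2 =? j2))%Z then cos phi / weight m1 m2 (i1, i2) else 0.
Proof.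
  intros [[Hi1 Hi2] [Mi Pi]]%inI_spec [[Hj1 Hj2] [Mj Pj]]%inI_spec.
  assert (Hm1R : 0 < INR m1) by (apply lt_0_INR; lia).
  assert (Hm2R : 0 < INR m2) by (apply lt_0_INR; lia).
  rewrite (Gammaset_cos_sum m1 m2 (fun g1 => cos (IZR g1 * IZR i1 * PI / (2 * INR m1)) *
                                              cos (IZR g1 * IZR j1 * PI / (2 * INR m1)))).
  cbv zeta. rewrite node_row_sum, node_row_alt_sum by lia.
  destruct (Z.eqb_spec i1 j1) as [<-|Nij].
  2:{ replace ((i1 =? Z.of_nat m1) && (j1 =? Z.of_nat m1))%Z with false
        by (destruct (Z.eqb_spec i1 (Z.of_nat m1)), (Z.eqb_spec j1 (Z.of_nat m1)); simpl; lia).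
      rewrite andb_false_l. ring. }
  (* same row: [i2 - j2 = 2 h] *)
  destruct (proj1 (Z.even_spec (i2 - j2))) as [h Hh].
  { rewrite Z.even_sub. rewrite Z.even_add in Pi, Pj.
    destruct (Z.even i1), (Z.even i2), (Z.even j2); simpl in *; congruence. }
  rewrite Hh, Gamma_col_sum by lia.
  unfold weight. cbn [fst andb].
  destruct (Z.eqb_spec i1 (Z.of_nat m1)) as [Em|Nm]; cbn [andb].
  - (* last row: [|h| < m2], so the shifted frequencies are annihilated *)
    rewrite Gamma_col_sum_shifted by lia.
    replace (i1 =? 0)%Z with false by lia.
    destruct (Z.eqb_spec i2 j2); destruct (Z.eqb_spec h 0); try lia; field; lra.
  - destruct (Z.eqb_spec i2 j2); destruct (Z.eqb_spec h 0); destruct (Z.eqb_spec i1 0); try lia;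
      field; lra.
Qed.

End DualSums.

Lemma Cx_eq (z w : Cx) : fst z = fst w -> snd z = snd w -> z = w.
Proof. destruct z, w; simpl; intros; subst; auto. Qed.

Lemma Csum_split {A} (l : list A) F :
  Csum l F = (Rsum l (fun a => fst (F a)), Rsum l (fun a => snd (F a))).
Proof. induction l; simpl; auto. unfold Csum in *; simpl. now rewrite IHl. Qed.

Section ComplexSums.
Context {A : Type}.
Implicit Types (l : list A) (F G : A -> Cx).

Lemma Csum_ext l F G : (forall a, In a l -> F a = G a) -> Csum l F = Csum l G.
Proof. intro H. rewrite !Csum_split. f_equal; apply Rsum_ext; intros a Ha; now rewrite H. Qed.

Lemma Csum_zero l : Csum l (fun _ => C0) = C0.
Proof. rewrite Csum_split. simpl. now rewrite Rsum_zero. Qed.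

Lemma Csum_add l F G : Csum l (fun a => Cadd (F a) (G a)) = Cadd (Csum l F) (Csum l G).
Proof. rewrite !Csum_split. unfold Cadd. simpl. now rewrite !Rsum_plus. Qed.

Lemma Csum_mul_l l z F : Cmul z (Csum l F) = Csum l (fun a => Cmul z (F a)).
Proof.
  rewrite !Csum_split. unfold Cmul. simpl.
  rewrite !Rsum_minus, !Rsum_plus, !Rsum_scal. reflexivity.
Qed.

Lemma Csum_mul_r l z F : Cmul (Csum l F) z = Csum l (fun a => Cmul (F a) z).
Proof.
  rewrite !Csum_split. unfold Cmul. simpl.
  rewrite !Rsum_minus, !Rsum_plus, !Rsum_mult_r. reflexivity.
Qed.

Lemma CdivR_Csum l x F : CdivR (Csum l F) x = Csum l (fun a => CdivR (F a) x).
Proof. rewrite !Csum_split. unfold CdivR, Rdiv. simpl. now rewrite !Rsum_mult_r. Qed.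

End ComplexSums.

Lemma Csum_exchange {A B} (l1 : list A) (l2 : list B) F :
  Csum l1 (fun a => Csum l2 (fun b => F a b)) = Csum l2 (fun b => Csum l1 (fun a => F a b)).
Proof.
  induction l1 as [|a l1 IH]; [symmetry; apply Csum_zero|].
  change (Cadd (Csum l2 (fun b => F a b)) (Csum l1 (fun a => Csum l2 (fun b => F a b))) =
          Csum l2 (fun b => Cadd (F a b) (Csum l1 (fun a => F a b)))).
  now rewrite IH, Csum_add.
Qed.

(* Summing a Kronecker delta over [I^(m)] or [Gamma_square] (both are filtered
   rectangles, hence duplicate-free). *)
Lemma Rsum_delta_rect p a1 n1 a2 n2 y1 y2 (F : Z * Z -> R) :
  In (y1, y2) (filter p (pairs (Zrange a1 n1) (Zrange a2 n2))) ->
  Rsum (filter p (pairs (Zrange a1 n1) (Zrange a2 n2)))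
    (fun x => if ((fst x =? y1) && (snd x =? y2))%Z then F x else 0) = F (y1, y2).
Proof.
  intros [[H1%In_Zrange H2%In_Zrange]%In_pairs Hp]%filter_In.
  rewrite Rsum_filter, Rsum_pairs, <- (Rsum_delta a1 n1 y1 (fun _ => F (y1, y2))) by lia.
  apply Rsum_ext. intros a _. cbn [fst snd].
  destruct (Z.eqb_spec a y1) as [->|Na].
  - rewrite <- (Rsum_delta a2 n2 y2 (fun b => F (y1, b))) by lia.
    apply Rsum_ext. intros b _.
    destruct (Z.eqb_spec b y2) as [->|Nb]; [rewrite Hp|destruct (p (y1, b))]; reflexivity.
  - transitivity (Rsum (Zrange a2 n2) (fun _ => 0)); [|now rewrite Rsum_zero].
    apply Rsum_ext. intros b _. destruct (p (a, b)); reflexivity.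
Qed.

Lemma Csum_delta_rect p a1 n1 a2 n2 y1 y2 (F : Z * Z -> Cx) :
  In (y1, y2) (filter p (pairs (Zrange a1 n1) (Zrange a2 n2))) ->
  Csum (filter p (pairs (Zrange a1 n1) (Zrange a2 n2)))
    (fun x => if ((fst x =? y1) && (snd x =? y2))%Z then F x else C0) = F (y1, y2).
Proof.
  intro H. rewrite Csum_split. apply Cx_eq; cbn [fst snd].
  - rewrite <- (Rsum_delta_rect p a1 n1 a2 n2 y1 y2 (fun x => fst (F x))) by auto.
    apply Rsum_ext. intros. now destruct andb.
  - rewrite <- (Rsum_delta_rect p a1 n1 a2 n2 y1 y2 (fun x => snd (F x))) by auto.
    apply Rsum_ext. intros. now destruct andb.
Qed.

(** * Orthogonality of the [chi_gamma] and the interpolation formula *)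

(* [(c1 e^{ix}) conj (c2 e^{iy}) = c1 c2 e^{i(x-y)}], written with two phases so
   that both components are cosines. *)
Lemma Cmul_polar_conj c1 x c2 y :
  Cmul (Cmul (RtoC c1) (Cexpi x)) (Cconj (Cmul (RtoC c2) (Cexpi y))) =
  (c1 * c2 * cos (x - y + 0), c1 * c2 * cos (x - y + - (PI / 2))).
Proof.
  unfold Cmul, Cconj, RtoC, Cexpi. simpl.
  rewrite Rplus_0_r, cos_plus, cos_neg, sin_neg, cos_PI2, sin_PI2, cos_minus, sin_minus.
  f_equal; ring.
Qed.

Lemma weight_pos m1 m2 i : (0 < m1)%nat -> (0 < m2)%nat -> 0 < weight m1 m2 i.
Proof.
  intros. assert (0 < INR m1) by (apply lt_0_INR; lia).
  assert (0 < INR m2) by (apply lt_0_INR; lia).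
  unfold weight. destruct (fst i =? 0)%Z; apply Rdiv_lt_0_compat; lra || nra.
Qed.

Section Interpolation.
Variables (m1 m2 : nat) (Hm1 : (0 < m1)%nat) (Hm2 : (0 < m2)%nat).

Lemma inner_chi a b : inGamma m1 m2 a = true -> inGamma m1 m2 b = true ->
  inner_w m1 m2 (chi m1 m2 a) (chi m1 m2 b) =
  (if ((fst a =? fst b) && (snd a =? snd b))%Z then gamma_norm2 m1 (fst a) else 0, 0).
Proof.
  destruct a as [a1 a2], b as [b1 b2]. intros Ha Hb.
  unfold inner_w, chi. rewrite Csum_split. cbn [fst snd].
  set (u := fun i : Z * Z => cos (IZR a1 * IZR (fst i) * PI / (2 * INR m1)) *
                             cos (IZR b1 * IZR (fst i) * PI / (2 * INR m1))).
  set (x := fun i : Z * Z => IZR (snd i) * (IZR (a2 - b2) * PI / (2 * INR m2))).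
  assert (Hx : forall i : Z * Z, IZR a2 * IZR (snd i) * PI / (2 * INR m2) -
                                 IZR b2 * IZR (snd i) * PI / (2 * INR m2) = x i)
    by (intro; unfold x; rewrite minus_IZR; unfold Rdiv; ring).
  rewrite (Rsum_ext _ _ (fun i => weight m1 m2 i * (u i * cos (x i + 0)))),
          (Rsum_ext _ (fun i => snd _) (fun i => weight m1 m2 i * (u i * cos (x i + - (PI / 2))))).
  2-3: intros i _; rewrite Cmul_polar_conj, Hx; unfold Cmul, RtoC, u; simpl; ring.
  unfold u, x. rewrite !chi_ortho_sum by auto. rewrite cos_neg, cos_PI2, cos_0.
  apply Cx_eq; simpl; destruct andb; ring.
Qed.

Lemma normsq_chi g : inGamma m1 m2 g = true -> normsq_w m1 m2 (chi m1 m2 g) = gamma_norm2 m1 (fst g).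
Proof. intro H. unfold normsq_w, Cre. rewrite inner_chi, !Z.eqb_refl by auto. reflexivity. Qed.

Lemma chi_dual i j : inI m1 m2 i = true -> inI m1 m2 j = true ->
  Csum (Gammaset m1 m2) (fun g =>
    CdivR (Cmul (chi m1 m2 g i) (Cconj (chi m1 m2 g j))) (gamma_norm2 m1 (fst g))) =
  (if ((fst i =? fst j) && (snd i =? snd j))%Z then / weight m1 m2 i else 0, 0).
Proof.
  destruct i as [i1 i2], j as [j1 j2]. intros Hi Hj.
  unfold chi. rewrite Csum_split. cbn [fst snd].
  set (u := fun g : Z * Z => cos (IZR (fst g) * IZR i1 * PI / (2 * INR m1)) *
                             cos (IZR (fst g) * IZR j1 * PI / (2 * INR m1))).
  set (x := fun g : Z * Z => IZR (snd g) * (IZR (i2 - j2) * PI / (2 * INR m2))).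
  assert (Hx : forall g : Z * Z, IZR (snd g) * IZR i2 * PI / (2 * INR m2) -
                                 IZR (snd g) * IZR j2 * PI / (2 * INR m2) = x g)
    by (intro; unfold x; rewrite minus_IZR; unfold Rdiv; ring).
  rewrite (Rsum_ext _ _ (fun g => u g / gamma_norm2 m1 (fst g) * cos (x g + 0))),
          (Rsum_ext _ (fun g => snd _) (fun g => u g / gamma_norm2 m1 (fst g) * cos (x g + - (PI / 2)))).
  2-3: intros g _; rewrite Cmul_polar_conj, Hx; unfold CdivR, u; simpl; field;
    apply Rgt_not_eq, gamma_norm2_pos.
  unfold u, x. rewrite !chi_dual_sum by auto. rewrite cos_neg, cos_PI2, cos_0.
  pose proof (weight_pos m1 m2 (i1, i2) Hm1 Hm2).
  apply Cx_eq; simpl; destruct andb; field; lra.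
Qed.

Lemma node_angle_range i1 : (0 <= i1 <= Z.of_nat m1)%Z ->
  0 <= IZR i1 * PI / (2 * INR m1) <= PI.
Proof.
  intro Hi. assert (0 < INR m1) by (apply lt_0_INR; lia). pose proof PI_RGT_0.
  assert (0 <= IZR i1 <= INR m1) by (rewrite INR_IZR_INZ; split; apply IZR_le; lia).
  split; [apply Rmult_le_pos; [nra|apply Rlt_le, Rinv_0_lt_compat; lra]|].
  apply Rmult_le_reg_r with (2 * INR m1); [lra|].
  unfold Rdiv. rewrite Rmult_assoc, Rinv_l; nra.
Qed.

Lemma Xfun_node g i : (0 <= fst i <= Z.of_nat m1)%Z ->
  Xfun g (r_node m1 (fst i)) (theta_node m2 (snd i)) = chi m1 m2 g i.
Proof.
  destruct g as [g1 g2], i as [i1 i2]. cbn [fst snd]. intro Hi.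
  unfold Xfun, chi, Tcheb, r_node, theta_node. cbn [fst snd].
  rewrite acos_cos by (now apply node_angle_range).
  f_equal; f_equal; [f_equal|]; unfold Rdiv; ring.
Qed.

Lemma Pfun_node c i : inI m1 m2 i = true ->
  Pfun m1 m2 c (r_node m1 (fst i)) (theta_node m2 (snd i)) =
  Csum (Gammaset m1 m2) (fun g => Cmul (c g) (chi m1 m2 g i)).
Proof.
  destruct i as [i1 i2]. intros [[Hi1 _] _]%inI_spec.
  unfold Pfun. apply Csum_ext. intros g _. now rewrite Xfun_node.
Qed.

Lemma inner_interpolant c f g : interpolates m1 m2 c f -> In g (Gammaset m1 m2) ->
  inner_w m1 m2 f (chi m1 m2 g) = Cmul (c g) (RtoC (gamma_norm2 m1 (fst g))).
Proof.
  intros Hint Hg. unfold inner_w.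
  rewrite (Csum_ext _ _ (fun i => Csum (Gammaset m1 m2) (fun g' => Cmul (c g')
     (Cmul (RtoC (weight m1 m2 i)) (Cmul (chi m1 m2 g' i) (Cconj (chi m1 m2 g i))))))).
  2:{ intros i Hi. rewrite <- (Hint i Hi), Pfun_node by (now apply In_Iset).
      rewrite Csum_mul_r, Csum_mul_l. apply Csum_ext. intros g' _.
      destruct (RtoC _), (c g'), (chi _ _ g' i), (Cconj _). unfold Cmul. simpl. f_equal; ring. }
  rewrite Csum_exchange.
  rewrite (Csum_ext _ _ (fun g' => if ((fst g' =? fst g) && (snd g' =? snd g))%Z
                                   then Cmul (c g') (RtoC (gamma_norm2 m1 (fst g'))) else C0)).
  - destruct g as [g1 g2]. now apply Csum_delta_rect.
  - intros g' Hg'. rewrite <- Csum_mul_l.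
    fold (inner_w m1 m2 (chi m1 m2 g') (chi m1 m2 g)).
    rewrite inner_chi by (now apply In_Gammaset).
    destruct andb; [reflexivity|]. unfold Cmul, C0, RtoC. simpl. f_equal; ring.
Qed.

Lemma interpolant_coef c f : interpolates m1 m2 c f ->
  forall g, In g (Gammaset m1 m2) -> c g = coef m1 m2 f g.
Proof.
  intros Hint g Hg. unfold coef.
  rewrite (inner_interpolant c f g Hint Hg), normsq_chi by (now apply In_Gammaset).
  pose proof (gamma_norm2_pos m1 (fst g)).
  unfold Cmul, CdivR, RtoC. apply Cx_eq; simpl; field; lra.
Qed.

Lemma coef_interpolates f : interpolates m1 m2 (coef m1 m2 f) f.
Proof.
  intros i Hi. rewrite Pfun_node by (now apply In_Iset).
  rewrite (Csum_ext _ _ (fun g => Csum (Iset m1 m2) (fun j => Cmul (f j)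
     (Cmul (RtoC (weight m1 m2 j)) (CdivR (Cmul (chi m1 m2 g i) (Cconj (chi m1 m2 g j)))
                                           (gamma_norm2 m1 (fst g))))))).
  2:{ intros g Hg. unfold coef, inner_w.
      rewrite normsq_chi, CdivR_Csum, Csum_mul_r by (now apply In_Gammaset).
      apply Csum_ext. intros j _.
      destruct (RtoC _), (f j), (chi _ _ g i), (Cconj _). unfold Cmul, CdivR. simpl.
      f_equal; unfold Rdiv; ring. }
  rewrite Csum_exchange.
  rewrite (Csum_ext _ _ (fun j => if ((fst j =? fst i) && (snd j =? snd i))%Z then f j else C0)).
  - destruct i as [i1 i2]. now apply Csum_delta_rect.
  - intros j Hj. rewrite <- !Csum_mul_l, chi_dual by (now apply In_Iset).
    pose proof (weight_pos m1 m2 j Hm1 Hm2).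
    destruct i as [i1 i2], j as [j1 j2]. cbn [fst snd].
    rewrite (Z.eqb_sym i1 j1), (Z.eqb_sym i2 j2).
    destruct (Z.eqb_spec j1 i1) as [<-|]; destruct (Z.eqb_spec j2 i2) as [<-|]; cbn [andb];
    destruct (f _); unfold Cmul, RtoC, C0; simpl; f_equal; field; lra.
Qed.

End Interpolation.

(** * Chebyshev polynomials and their moments [int_0^1 T_n(r) r dr] *)

(* [T_n] through the three-term recurrence, a polynomial hence continuous on R. *)
Fixpoint cheb (n : nat) (r : R) : R :=
  match n with
  | 0 => 1
  | S p => match p with 0 => r | S q => 2 * r * cheb p r - cheb q r end
  end.

Lemma nat_ind2 (P : nat -> Prop) : P 0%nat -> P 1%nat ->
  (forall n, P n -> P (S n) -> P (S (S n))) -> forall n, P n.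
Proof.
  intros H0 H1 HS n. assert (P n /\ P (S n)) as [? ?]; auto.
  induction n; auto. destruct IHn; auto.
Qed.

Lemma cheb_continuous n x : continuous (cheb n) x.
Proof.
  revert x. induction n as [| |n IH0 IH1] using nat_ind2; intro x.
  - apply continuous_const.
  - apply continuous_id.
  - apply continuity_pt_filterlim.
    apply (continuity_pt_minus (fun r => 2 * r * cheb (S n) r) (cheb n)).
    + apply (continuity_pt_mult (fun r => 2 * r) (cheb (S n))).
      * apply (continuity_pt_mult (fun _ => 2) (fun r => r));
          [apply continuity_pt_const; intros a b; auto|apply derivable_continuous_pt, derivable_pt_id].
      * apply continuity_pt_filterlim, IH1.
    + apply continuity_pt_filterlim, IH0.
Qed.

Lemma cheb_cos n x : cheb n (cos x) = cos (INR n * x).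
Proof.
  induction n as [| |n IH0 IH1] using nat_ind2.
  - simpl. now rewrite Rmult_0_l, cos_0.
  - simpl. f_equal; ring.
  - change (cheb (S (S n)) (cos x)) with (2 * cos x * cheb (S n) (cos x) - cheb n (cos x)).
    rewrite IH0, IH1, !S_INR.
    replace ((INR n + 1 + 1) * x) with ((INR n + 1) * x + x) by ring.
    replace (INR n * x) with ((INR n + 1) * x - x) by ring.
    rewrite cos_plus, cos_minus. ring.
Qed.

Lemma Tcheb_cheb z r : -1 <= r <= 1 -> Tcheb z r = cheb (Z.abs_nat z) r.
Proof.
  intro H. unfold Tcheb. rewrite <- (cos_acos r) at 2 by auto.
  rewrite cheb_cos, INR_IZR_INZ, Nat2Z.inj_abs_nat.
  destruct (Z_le_gt_dec 0 z).
  - now rewrite Z.abs_eq by lia.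
  - rewrite Z.abs_neq, opp_IZR, Ropp_mult_distr_l_reverse, cos_neg by lia. reflexivity.
Qed.

Lemma ex_RInt_cheb n : ex_RInt (fun r => cheb n r * r) 0 1.
Proof.
  apply (ex_RInt_continuous (V := R_CompleteNormedModule)). intros z _.
  apply (continuous_mult (cheb n) (fun r => r)); [apply cheb_continuous|apply continuous_id].
Qed.

Definition cheb_moment (z : Z) : R := RInt (fun r => cheb (Z.abs_nat z) r * r) 0 1.

Lemma cheb_moment_subst n : RInt (fun r => cheb n r * r) 0 1 =
  RInt (fun y => - sin y * (cos (INR n * y) * cos y)) (PI / 2) 0.
Proof.
  rewrite <- cos_PI2 at 1. rewrite <- cos_0 at 1.
  rewrite <- (RInt_comp (fun r => cheb n r * r) cos (fun y => - sin y)).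
  - apply RInt_ext. intros x _. now rewrite cheb_cos.
  - intros x _. apply (continuous_mult (cheb n) (fun r => r));
      [apply cheb_continuous|apply continuous_id].
  - intros x _. split.
    + auto_derive; auto. ring.
    + apply (ex_derive_continuous (K := R_AbsRing) (V := R_NormedModule)). auto_derive. auto.
Qed.

(* An antiderivative of [sin (m y)], also for [m = 0]. *)
Definition sin_antideriv (m y : R) : R := if Req_EM_T m 0 then 0 else - cos (m * y) / m.

Lemma sin_antideriv_derive m y : is_derive (sin_antideriv m) y (sin (m * y)).
Proof.
  unfold sin_antideriv. destruct (Req_EM_T m 0) as [->|E].
  - rewrite Rmult_0_l, sin_0. auto_derive; auto.
  - auto_derive; auto. field. auto.
Qed.

Lemma sin_antideriv_incr_4k z :
  sin_antideriv (4 * IZR z) 0 - sin_antideriv (4 * IZR z) (PI / 2) = 0.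
Proof.
  unfold sin_antideriv. destruct (Req_EM_T (4 * IZR z) 0); [ring|].
  replace (4 * IZR z * (PI / 2)) with (IZR (2 * z) * PI) by (rewrite mult_IZR; field).
  rewrite cos_int_PI, Rmult_0_r, cos_0.
  replace (Z.even (2 * z)) with true by (symmetry; apply Z.even_spec; exists z; auto). ring.
Qed.

Lemma sin_antideriv_incr_4k2 z :
  sin_antideriv (2 + 4 * IZR z) 0 - sin_antideriv (2 + 4 * IZR z) (PI / 2) =
  - 2 / (2 + 4 * IZR z).
Proof.
  assert (H : 2 + 4 * IZR z <> 0).
  { replace (2 + 4 * IZR z) with (IZR (2 + 4 * z)) by (rewrite plus_IZR, mult_IZR; reflexivity).
    intros E%eq_IZR. lia. }
  unfold sin_antideriv. destruct (Req_EM_T (2 + 4 * IZR z) 0); [contradiction|].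
  replace ((2 + 4 * IZR z) * (PI / 2)) with (IZR (2 * z + 1) * PI)
    by (rewrite plus_IZR, mult_IZR; field).
  rewrite cos_int_PI, Z.even_odd, Rmult_0_r, cos_0. field. auto.
Qed.

(* [- sin y cos (2 j y) cos y = - (sin ((2+2j) y) + sin ((2-2j) y)) / 4]. *)
Lemma is_RInt_cheb_even (j : R) :
  is_RInt (fun y => - sin y * (cos (2 * j * y) * cos y)) (PI / 2) 0
    (- / 4 * ((sin_antideriv (2 + 2 * j) 0 - sin_antideriv (2 + 2 * j) (PI / 2)) +
              (sin_antideriv (2 - 2 * j) 0 - sin_antideriv (2 - 2 * j) (PI / 2)))).
Proof.
  set (F := fun y => - / 4 * (sin_antideriv (2 + 2 * j) y + sin_antideriv (2 - 2 * j) y)).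
  replace (- / 4 * (_ + _)) with (minus (F 0) (F (PI / 2)))
    by (unfold F, minus, plus, opp; simpl; ring).
  apply (is_RInt_derive (V := R_CompleteNormedModule)).
  - intros y _. unfold F.
    replace (- sin y * (cos (2 * j * y) * cos y)) with
      (- / 4 * (sin ((2 + 2 * j) * y) + sin ((2 - 2 * j) * y))).
    + apply (is_derive_scal (fun y => sin_antideriv (2 + 2 * j) y + sin_antideriv (2 - 2 * j) y)).
      apply (is_derive_plus (sin_antideriv (2 + 2 * j)) (sin_antideriv (2 - 2 * j)));
        apply sin_antideriv_derive.
    + replace ((2 + 2 * j) * y) with (2 * y + 2 * j * y) by ring.
      replace ((2 - 2 * j) * y) with (2 * y - 2 * j * y) by ring.
      rewrite sin_plus, sin_minus, sin_2a. field.
  - intros y _. apply (ex_derive_continuous (K := R_AbsRing) (V := R_NormedModule)).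
    auto_derive. auto.
Qed.

Lemma one_minus_4k2_neq_0 k : 1 - 4 * INR k ^ 2 <> 0.
Proof.
  destruct k as [|k]; [simpl; lra|]. rewrite S_INR. pose proof (pos_INR k). nra.
Qed.

Lemma cheb_moment_4k k : cheb_moment (4 * Z.of_nat k) = / (2 * (1 - 4 * INR k ^ 2)).
Proof.
  unfold cheb_moment. replace (Z.abs_nat (4 * Z.of_nat k)) with (4 * k)%nat by lia.
  rewrite cheb_moment_subst.
  rewrite (RInt_ext _ (fun y => - sin y * (cos (2 * (2 * INR k) * y) * cos y)))
    by (intros x _; rewrite mult_INR; simpl (INR 4); do 3 f_equal; ring).
  rewrite (is_RInt_unique _ _ _ _ (is_RInt_cheb_even (2 * INR k))).
  replace (2 + 2 * (2 * INR k)) with (2 + 4 * IZR (Z.of_nat k)) by (rewrite <- INR_IZR_INZ; ring).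
  replace (2 - 2 * (2 * INR k)) with (2 + 4 * IZR (- Z.of_nat k))
    by (rewrite opp_IZR, <- INR_IZR_INZ; ring).
  rewrite !sin_antideriv_incr_4k2, opp_IZR, <- INR_IZR_INZ.
  replace (2 + 4 * - INR k) with (2 - 4 * INR k) by ring.
  pose proof (one_minus_4k2_neq_0 k) as Hk2.
  assert (Hp : 2 + 4 * INR k <> 0) by (pose proof (pos_INR k); lra).
  assert (Hm : 2 - 4 * INR k <> 0) by (intro E; apply Hk2; nra).
  field. repeat split; assumption.
Qed.

Lemma cheb_moment_4k2 k : cheb_moment (4 * Z.of_nat k + 2) = 0.
Proof.
  unfold cheb_moment. replace (Z.abs_nat (4 * Z.of_nat k + 2)) with (4 * k + 2)%nat by lia.
  rewrite cheb_moment_subst.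
  rewrite (RInt_ext _ (fun y => - sin y * (cos (2 * (2 * INR k + 1) * y) * cos y)))
    by (intros x _; rewrite plus_INR, mult_INR; simpl (INR 4); simpl (INR 2); do 3 f_equal; ring).
  rewrite (is_RInt_unique _ _ _ _ (is_RInt_cheb_even (2 * INR k + 1))).
  replace (2 + 2 * (2 * INR k + 1)) with (4 * IZR (Z.of_nat k + 1))
    by (rewrite plus_IZR, <- INR_IZR_INZ; ring).
  replace (2 - 2 * (2 * INR k + 1)) with (4 * IZR (- Z.of_nat k))
    by (rewrite opp_IZR, <- INR_IZR_INZ; ring).
  rewrite !sin_antideriv_incr_4k. ring.
Qed.

(** * The disk integral of an element of [Pi_square] *)

Lemma has_RInt_of_is_RInt f a b v : is_RInt f a b v -> has_RInt f a b v.
Proof.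
  intro H. assert (ex : ex_RInt f a b) by (exists v; auto).
  exists (ex_RInt_Reals_0 _ _ _ ex). rewrite <- RInt_Reals. now apply is_RInt_unique.
Qed.

Lemma is_RInt_eq_val (f : R -> R) a b (v w : R) : is_RInt f a b v -> v = w -> is_RInt f a b w.
Proof. now intros H <-. Qed.

Lemma is_RInt_const_R a b c : is_RInt (fun _ => c) a b ((b - a) * c).
Proof. apply (is_RInt_const (V := R_NormedModule)). Qed.

Lemma is_RInt_Rsum {A} (l : list A) (F : A -> R -> R) (V : A -> R) a b :
  (forall x, In x l -> is_RInt (F x) a b (V x)) ->
  is_RInt (fun t => Rsum l (fun x => F x t)) a b (Rsum l V).
Proof.
  induction l as [|x l IH]; intro H; simpl.
  - apply (is_RInt_eq_val _ _ _ _ _ (is_RInt_const_R a b 0)). ring.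
  - apply (is_RInt_plus (V := R_NormedModule) (F x) (fun t => Rsum l (fun x => F x t)));
      [apply H; left; reflexivity | apply IH; intros; apply H; right; auto].
Qed.

Lemma is_RInt_cos_period (m : Z) :
  is_RInt (fun t => cos (IZR m * t)) 0 (2 * PI) (if (m =? 0)%Z then 2 * PI else 0).
Proof.
  destruct (Z.eqb_spec m 0) as [->|E].
  - apply is_RInt_ext with (f := fun _ => 1); [intros; now rewrite Rmult_0_l, cos_0|].
    apply (is_RInt_eq_val _ _ _ _ _ (is_RInt_const_R 0 (2 * PI) 1)). ring.
  - assert (HR : IZR m <> 0) by (intros H%eq_IZR; lia).
    apply (is_RInt_eq_val _ _ _ (minus (sin (IZR m * (2 * PI)) / IZR m) (sin (IZR m * 0) / IZR m))).
    + apply (is_RInt_derive (V := R_CompleteNormedModule) (fun t => sin (IZR m * t) / IZR m)).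
      * intros t _. auto_derive; auto. field. auto.
      * intros t _. apply (ex_derive_continuous (K := R_AbsRing) (V := R_NormedModule)).
        auto_derive. auto.
    + unfold minus, plus, opp; simpl. rewrite Rmult_0_r, sin_0.
      replace (IZR m * (2 * PI)) with (0 + 2 * IZR m * PI) by ring.
      rewrite sin_add_2kPI, sin_0. field. auto.
Qed.

Lemma is_RInt_sin_period (m : Z) : is_RInt (fun t => sin (IZR m * t)) 0 (2 * PI) 0.
Proof.
  destruct (Z.eqb_spec m 0) as [->|E].
  - apply is_RInt_ext with (f := fun _ => 0); [intros; now rewrite Rmult_0_l, sin_0|].
    apply (is_RInt_eq_val _ _ _ _ _ (is_RInt_const_R 0 (2 * PI) 0)). ring.
  - assert (HR : IZR m <> 0) by (intros H%eq_IZR; lia).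
    apply (is_RInt_eq_val _ _ _ (minus (- cos (IZR m * (2 * PI)) / IZR m) (- cos (IZR m * 0) / IZR m))).
    + apply (is_RInt_derive (V := R_CompleteNormedModule) (fun t => - cos (IZR m * t) / IZR m)).
      * intros t _. auto_derive; auto. field. auto.
      * intros t _. apply (ex_derive_continuous (K := R_AbsRing) (V := R_NormedModule)).
        auto_derive. auto.
    + unfold minus, plus, opp; simpl. rewrite Rmult_0_r, cos_0.
      replace (IZR m * (2 * PI)) with (0 + 2 * IZR m * PI) by ring.
      rewrite cos_add_2kPI, cos_0. field. auto.
Qed.

Lemma iterated_integral_trig_cheb (l : list (Z * Z)) (a b : Z * Z -> R) (F : R -> R -> R) :
  (forall r t, F r t = Rsum l (fun g =>
     (a g * cos (IZR (snd g) * t) + b g * sin (IZR (snd g) * t)) * Tcheb (fst g) r) * r) ->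
  has_iter_int F
    (Rsum l (fun g => a g * cheb_moment (fst g) * (if (snd g =? 0)%Z then 2 * PI else 0))).
Proof.
  intro HF.
  exists (fun t => Rsum l (fun g =>
    (a g * cos (IZR (snd g) * t) + b g * sin (IZR (snd g) * t)) * cheb_moment (fst g))).
  split.
  - intros t _. apply has_RInt_of_is_RInt.
    apply is_RInt_ext with (f := fun r => Rsum l (fun g =>
      (a g * cos (IZR (snd g) * t) + b g * sin (IZR (snd g) * t)) *
      (cheb (Z.abs_nat (fst g)) r * r))).
    + intros r Hr. rewrite HF, Rsum_mult_r. apply Rsum_ext. intros g _.
      rewrite Rmin_left, Rmax_right in Hr by lra.
      rewrite Tcheb_cheb by lra. ring.
    + apply is_RInt_Rsum. intros g _.
      apply (is_RInt_scal (V := R_NormedModule) (fun r => cheb (Z.abs_nat (fst g)) r * r)).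
      apply (RInt_correct (V := R_CompleteNormedModule)), ex_RInt_cheb.
  - apply has_RInt_of_is_RInt, is_RInt_Rsum. intros g _.
    apply is_RInt_ext with (f := fun t => plus (scal (a g * cheb_moment (fst g)) (cos (IZR (snd g) * t)))
                                             (scal (b g * cheb_moment (fst g)) (sin (IZR (snd g) * t))))
      ; [intros; unfold plus, scal; simpl; unfold mult; simpl; ring|].
    replace (a g * cheb_moment (fst g) * _) with
      (plus (scal (a g * cheb_moment (fst g)) (if (snd g =? 0)%Z then 2 * PI else 0))
            (scal (b g * cheb_moment (fst g)) 0))
      by (unfold plus, scal; simpl; unfold mult; simpl; ring).
    apply (is_RInt_plus (V := R_NormedModule)); apply (is_RInt_scal (V := R_NormedModule));
      [apply is_RInt_cos_period|apply is_RInt_sin_period].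
Qed.

Lemma Cre_Pfun m1 m2 c r t : Cre (Pfun m1 m2 c r t) * r =
  Rsum (Gammaset m1 m2) (fun g => (fst (c g) * cos (IZR (snd g) * t) +
                                   (- snd (c g)) * sin (IZR (snd g) * t)) * Tcheb (fst g) r) * r.
Proof.
  unfold Pfun, Cre. rewrite Csum_split. cbn [fst]. f_equal. apply Rsum_ext. intros g _.
  unfold Cmul, Xfun, RtoC, Cexpi. destruct (c g). simpl. ring.
Qed.

Lemma Cim_Pfun m1 m2 c r t : Cim (Pfun m1 m2 c r t) * r =
  Rsum (Gammaset m1 m2) (fun g => (snd (c g) * cos (IZR (snd g) * t) +
                                   fst (c g) * sin (IZR (snd g) * t)) * Tcheb (fst g) r) * r.
Proof.
  unfold Pfun, Cim. rewrite Csum_split. cbn [snd]. f_equal. apply Rsum_ext. intros g _.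
  unfold Cmul, Xfun, RtoC, Cexpi. destruct (c g). simpl. ring.
Qed.

Lemma Rsum_range_mult4 (h : Z -> R) :
  (forall z, Z.even z = false -> h z = 0) -> (forall q, (0 <= q)%Z -> h (4 * q + 2)%Z = 0) ->
  forall m, Rsum (Zrange 0 (S (2 * m))) h =
            Rsum (seq 0 (S (Nat.div m 2))) (fun k => h (4 * Z.of_nat k)%Z).
Proof.
  intros Hodd H2. induction m as [|m IH]; [reflexivity|].
  replace (S (2 * S m)) with (S (2 * m) + 2)%nat by lia.
  rewrite Zrange_app, Rsum_app, IH.
  assert (Etail : Rsum (Zrange (0 + Z.of_nat (S (2 * m))) 2) h = h (2 * Z.of_nat m + 2)%Z).
  { rewrite !Zrange_S. replace (Zrange _ 0) with (@nil Z) by reflexivity.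
    rewrite !Rsum_cons, Rsum_nil.
    rewrite (Hodd (0 + Z.of_nat (S (2 * m)))%Z)
      by (replace (0 + Z.of_nat (S (2 * m)))%Z with (2 * Z.of_nat m + 1)%Z by lia;
          apply Z.even_odd).
    replace (0 + Z.of_nat (S (2 * m)) + 1)%Z with (2 * Z.of_nat m + 2)%Z by lia. ring. }
  rewrite Etail.
  destruct (Nat.Even_or_Odd m) as [[q ->]|[q ->]].
  - replace (Nat.div (S (2 * q)) 2) with (Nat.div (2 * q) 2)
      by (rewrite <- (Nat.div_unique (2 * q) 2 q 0), <- (Nat.div_unique (S (2 * q)) 2 q 1); lia).
    replace (2 * Z.of_nat (2 * q) + 2)%Z with (4 * Z.of_nat q + 2)%Z by lia.
    rewrite H2 by lia. ring.
  - replace (Nat.div (S (2 * q + 1)) 2) with (S (Nat.div (2 * q + 1) 2))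
      by (rewrite <- (Nat.div_unique (2 * q + 1) 2 q 1),
                  <- (Nat.div_unique (S (2 * q + 1)) 2 (S q) 0); lia).
    rewrite (seq_S (S (Nat.div (2 * q + 1) 2)) 0), Rsum_app, Rsum_cons, Rsum_nil.
    rewrite <- (Nat.div_unique (2 * q + 1) 2 q 1) by lia.
    replace (4 * Z.of_nat (0 + S q))%Z with (2 * Z.of_nat (2 * q + 1) + 2)%Z by lia. ring.
Qed.

(* The angular and radial integrations collapse the sum over [Gamma_square] to the
   coefficients [(4k, 0)], weighted by [2 J_{4k} = 1 / (1 - 4 k^2)]. *)
Lemma cubature_sum m1 m2 (a : Z * Z -> R) : (0 < m2)%nat ->
  Rsum (Gammaset m1 m2)
    (fun g => a g * cheb_moment (fst g) * (if (snd g =? 0)%Z then 2 * PI else 0)) / PI =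
  Rsum (seq 0 (S (Nat.div m1 2))) (fun k => a (4 * Z.of_nat k, 0)%Z / (1 - 4 * INR k ^ 2)).
Proof.
  intro Hm2. pose proof PI_RGT_0.
  rewrite Rsum_Gammaset.
  rewrite (Rsum_ext _ _ (fun g1 =>
    if Z.even g1 then a (g1, 0%Z) * cheb_moment g1 * (2 * PI) else 0)).
  2:{ intros g1 _. rewrite <- (Rsum_delta (- Z.of_nat m2 + 1) (2 * m2) 0
        (fun _ => if Z.even g1 then a (g1, 0%Z) * cheb_moment g1 * (2 * PI) else 0)) by lia.
      apply Rsum_ext. intros g2 _. cbn [fst snd].
      destruct (Z.eqb_spec g2 0) as [->|]; [rewrite Z.add_0_r; destruct (Z.even g1)|]; ring. }
  rewrite Rsum_range_mult4.
  - unfold Rdiv. rewrite Rsum_mult_r. apply Rsum_ext. intros k _.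
    replace (Z.even (4 * Z.of_nat k)) with true
      by (symmetry; apply Z.even_spec; exists (2 * Z.of_nat k)%Z; lia).
    rewrite cheb_moment_4k. pose proof (one_minus_4k2_neq_0 k). field. lra.
  - intros z ->. reflexivity.
  - intros q Hq. replace (Z.even (4 * q + 2)) with true
      by (symmetry; apply Z.even_spec; exists (2 * q + 1)%Z; lia).
    replace q with (Z.of_nat (Z.to_nat q)) by lia. rewrite cheb_moment_4k2. ring.
Qed.

Lemma disk_mean_cubature m1 m2 c : (0 < m2)%nat ->
  disk_mean (Pfun m1 m2 c) (cubature m1 c).
Proof.
  intro Hm2.
  exists (Rsum (Gammaset m1 m2) (fun g => fst (c g) * cheb_moment (fst g) *
                                          (if (snd g =? 0)%Z then 2 * PI else 0))),
         (Rsum (Gammaset m1 m2) (fun g => snd (c g) * cheb_moment (fst g) *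
                                          (if (snd g =? 0)%Z then 2 * PI else 0))).
  split; [|split; [|split]].
  - apply (iterated_integral_trig_cheb _ (fun g => fst (c g)) (fun g => - snd (c g))).
    intros; apply Cre_Pfun.
  - apply (iterated_integral_trig_cheb _ (fun g => snd (c g)) (fun g => fst (c g))).
    intros; apply Cim_Pfun.
  - rewrite cubature_sum by auto. unfold cubature, Cre. now rewrite Csum_split.
  - rewrite cubature_sum by auto. unfold cubature, Cim. now rewrite Csum_split.
Qed.

Lemma In_Gammaset_4k m1 m2 k : (0 < m2)%nat -> (k <= Nat.div m1 2)%nat ->
  In (4 * Z.of_nat k, 0)%Z (Gammaset m1 m2).
Proof.
  intros Hm2 Hk. assert (2 * Nat.div m1 2 <= m1)%nat by (apply Nat.Div0.mul_div_le).
  unfold Gammaset. apply filter_In. split.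
  - apply In_pairs. split; apply In_Zrange; lia.
  - apply inGamma_spec. rewrite Z.add_0_r. split; [lia|].
    apply Z.even_spec. exists (2 * Z.of_nat k)%Z. lia.
Qed.

Theorem mainTheorem14 (m1 m2 : nat) (Hm1 : (0 < m1)%nat) (Hm2 : (0 < m2)%nat)
  (f : Z * Z -> Cx) :
  (exists c : Z * Z -> Cx, interpolates m1 m2 c f) /\
  (forall c : Z * Z -> Cx, interpolates m1 m2 c f ->
     (forall g, In g (Gammaset m1 m2) -> c g = coef m1 m2 f g) /\
     disk_mean (Pfun m1 m2 c) (cubature m1 c)) /\
  (forall d : Z * Z -> Cx,
     let fP := fun i : Z * Z =>
       Pfun m1 m2 d (r_node m1 (fst i)) (theta_node m2 (snd i)) in
     disk_mean (Pfun m1 m2 d) (cubature m1 (coef m1 m2 fP))).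
Proof.
  split; [|split].
  - exists (coef m1 m2 f). now apply coef_interpolates.
  - intros c Hc. split.
    + now apply interpolant_coef.
    + now apply disk_mean_cubature.
  - intros d fP.
    (* [P_d] interpolates its own node values, so [coef fP] and [d] agree on [Gamma_square] *)
    assert (Hint : interpolates m1 m2 d fP) by (intros i _; reflexivity).
    replace (cubature m1 (coef m1 m2 fP)) with (cubature m1 d).
    + now apply disk_mean_cubature.
    + unfold cubature. apply Csum_ext. intros k Hk%in_seq.
      rewrite (interpolant_coef m1 m2 Hm1 Hm2 d fP Hint); [reflexivity|].
      apply In_Gammaset_4k; lia.
Qed.
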